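(* Let $k>l\ge0$ be integers with $k+l\ge3$, let $\theta\in\mathbb{R}$, $\xi=e^{i\theta}$, $f:\mathbb{N}\to[0,\infty)$, and $A=\xi(a^\dagger)^ka^l+\xi^*(a^\dagger)^la^k+f(a^\dagger a)$ with domain $\mathcal{D}_0$. Assume that $f(n)n^{-(k+l)/2}$ admits an asymptotic expansion in powers of $n^{-1/2}$, $$f(n)n^{-(k+l)/2}\sim\kappa+\frac{L_1}{n^{1/2}}+\frac{L_2}{n}+\cdots$$ with $\kappa<2$. Then $A$ has deficiency indices $n_+=n_-=k-l$ (so $A$ is not essentially self-adjoint and its self-adjoint extensions are parametrized by $\mathrm{U}(k-l)$).
   Context: $\mathbb{N}=\{0,1,2,\dots\}$. $\mathcal{H}$ is a separable complex Hilbert space with orthonormal basis $(\phi_n)_{n\in\mathbb{N}}$; $\mathcal{D}_0$ is the set of finite linear combinations of the $\phi_n$. The operators $a,a^\dagger$ have domain $\mathcal{D}_0$ and act by $a\phi_n=\sqrt{n}\,\phi_{n-1}$ ($a\phi_0=0$), $a^\dagger\phi_n=\sqrt{n+1}\,\phi_{n+1}$, extended linearly. $f(a^\dagger a)$ has domain $\mathcal{D}_0$ and $f(a^\dagger a)\phi_n=f(n)\phi_n$. Deficiency indices: $n_\pm=\dim\operatorname{Ran}(A\pm i)^\perp$. A function $g:\mathbb{N}\to\mathbb{C}$ admits the asymptotic expansion $g(n)\sim\sum_{s\ge0}\lambda_sn^{-s/2}$ if for every $S\in\mathbb{N}$ there are $C,N$ with $|g(n)-\sum_{s=0}^S\lambda_sn^{-s/2}|\le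 Cn^{-(S+1)/2}$ for all $n\ge N$. *)

From Stdlib Require Import Reals List.
From Coquelicot Require Import Coquelicot.
Import ListNotations.
Open Scope R_scope.

(* We realize H = l^2(N) with orthonormal basis phi_n = indicator of n.
   A vector is a sequence psi : nat -> C. *)
Definition vec := nat -> C.

Definition in_l2 (psi : vec) : Prop := ex_series (fun n => (Cmod (psi n)) ^ 2).

(* D_0 : finite linear combinations of the phi_n = finitely supported sequences *)
Definition in_D0 (phi : vec) : Prop := exists N : nat, forall n, (N <= n)%nat -> phi n = 0%C.

(* annihilation: a phi_n = sqrt n phi_{n-1}, i.e. (a psi)(n) = sqrt(n+1) psi(n+1) *)
Definition op_a (psi : vec) : vec := fun n => Cmult (RtoC (sqrt (INR (S n)))) (psi (S n)).
(* creation: a^dag phi_n = sqrt(n+1) phi_{n+1}, i.e. (a^dag psi)(n) = sqrt n psi(n-1), 0 at n=0 *)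
Definition op_adag (psi : vec) : vec :=
  fun n => match n with O => 0%C | S m => Cmult (RtoC (sqrt (INR n))) (psi m) end.
Definition op_fN (f : nat -> R) (psi : vec) : vec := fun n => Cmult (RtoC (f n)) (psi n).

Definition vadd (u v : vec) : vec := fun n => Cplus (u n) (v n).
Definition vscal (c : C) (u : vec) : vec := fun n => Cmult c (u n).

Definition mono (p q : nat) (psi : vec) : vec := Nat.iter p op_adag (Nat.iter q op_a psi).

Definition xi (theta : R) : C := (cos theta, sin theta).

Definition opA (k l : nat) (theta : R) (f : nat -> R) (psi : vec) : vec :=
  vadd (vadd (vscal (xi theta) (mono k l psi)) (vscal (Cconj (xi theta)) (mono l k psi)))
       (op_fN f psi).

(* inner product <psi, chi> = sum_n conj(psi n) chi n (antilinear in the first slot);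
   orthogonality: this series sums to 0 *)
Definition orth (psi chi : vec) : Prop :=
  is_series (fun n => Cmult (Cconj (psi n)) (chi n)) (RtoC 0).

(* Ran(A + s i)^perp, s = +1 or -1, as a subset of H = l^2 *)
Definition defect_space (A : vec -> vec) (s : R) (psi : vec) : Prop :=
  in_l2 psi /\
  forall phi, in_D0 phi -> orth psi (vadd (A phi) (vscal (RtoC s * Ci)%C phi)).

Definition csum (d : nat) (g : nat -> C) : C :=
  fold_right Cplus 0%C (map g (seq 0 d)).

Definition has_dim (K : vec -> Prop) (d : nat) : Prop :=
  exists v : nat -> vec,
    (forall j, (j < d)%nat -> K (v j)) /\
    (forall c : nat -> C, (forall n, csum d (fun j => Cmult (c j) (v j n)) = 0%C) ->
        forall j, (j < d)%nat -> c j = 0%C) /\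
    (forall psi, K psi -> exists c : nat -> C,
        forall n, psi n = csum d (fun j => Cmult (c j) (v j n))).

Definition def_index_plus (A : vec -> vec) (d : nat) : Prop := has_dim (defect_space A 1) d.
Definition def_index_minus (A : vec -> vec) (d : nat) : Prop := has_dim (defect_space A (-1)) d.

Definition asymp_expansion (g : nat -> R) (lam : nat -> R) : Prop :=
  forall S : nat, exists (Cst : R) (N : nat), forall n : nat, (N <= n)%nat ->
    Rabs (g n - sum_f_R0 (fun s => lam s * Rpower (INR n) (- INR s / 2)) S)
      <= Cst * Rpower (INR n) (- INR (S + 1) / 2).

(* In the basis (phi_n), A + i s (s = 1 or -1) is a band matrix coupling n only to n + m and n - m,
   m = k - l:  (A + i s) phi_j = xi b_j phi_(j+m) + xi^* b_(j-m) phi_(j-m) + (f j + i s) phi_j  (the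
   middle term only for j >= m), where b_j = sqrt (j!/(j-l)! * (j-l+k)!/(j-l)!) vanishes exactly for
   j < l.  Hence psi is orthogonal to Ran (A + i s) iff w = conj psi solves the transposed recurrence
       xi b_j w_(j+m) + xi^* b_(j-m) w_(j-m) + (f j + i s) w_j = 0   for every j.
   For j < l this forces w_j = 0, and on each residue class j_t = l + r + t m (r < m) it determines w
   from w_(j_0); so there are exactly m independent solutions, provided they are square summable.
   Along a class, u_t = xi^t w_(j_t) solves b_(t+1) u_(t+2) + (f + i s) u_(t+1) + b_t u_t = 0, and the
   energy  E_t = b_t^2 / b_(t+1) |u_t|^2 + b_t |u_(t+1)|^2 + f b_t / b_(t+1) Re (conj u_t u_(t+1))
   is comparable to b_t (|u_t|^2 + |u_(t+1)|^2) as soon as f^2 <= 4 (1 - eta)^2 b_t b_(t+1), which is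
   where kappa < 2 enters.  Its relative increments are summable because f / b and b_(t+1) / b_t have
   bounded variation (this uses the asymptotic expansion) and the sum of 1 / b_t is finite.  So
   |u_t|^2 = O (1 / b_t) = O (t^(-(k+l)/2)), which is summable since k + l >= 3. *)

From Stdlib Require Import Reals Lra Lia Arith List.
From Coquelicot Require Import Coquelicot.
Open Scope R_scope.

(** * Absolutely summable sequences and bounded variation *)

Fixpoint psum (a : nat -> R) (n : nat) : R :=
  match n with O => 0 | S n => psum a n + a n end.

Definition abs_summable (a : nat -> R) : Prop :=
  exists M, forall n, psum (fun t => Rabs (a t)) n <= M.

Definition bv (x : nat -> R) : Prop := abs_summable (fun t => x (S t) - x t).

Lemma psum_ext a b n : (forall t, a t = b t) -> psum a n = psum b n.
Proof. intros H; induction n; simpl; auto. now rewrite IHn, H. Qed.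

Lemma psum_le a b n : (forall t, a t <= b t) -> psum a n <= psum b n.
Proof. intros H; induction n; simpl. lra. specialize (H n); lra. Qed.

Lemma psum_nonneg a n : (forall t, 0 <= a t) -> 0 <= psum a n.
Proof. intros H; induction n; simpl. lra. specialize (H n); lra. Qed.

Lemma psum_incr a n m : (forall t, 0 <= a t) -> (n <= m)%nat -> psum a n <= psum a m.
Proof. intros H Hnm; induction Hnm; simpl. lra. specialize (H m); lra. Qed.

Lemma psum_plus a b n : psum (fun t => a t + b t) n = psum a n + psum b n.
Proof. induction n; simpl; lra. Qed.

Lemma psum_scal c a n : psum (fun t => c * a t) n = c * psum a n.
Proof. induction n; simpl. ring. rewrite IHn; ring. Qed.

Lemma abs_summable_eventually_le (a c : nat -> R) (T0 : nat) :
  (forall t, (T0 <= t)%nat -> Rabs (a t) <= c t) -> abs_summable c -> abs_summable a.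
Proof.
  intros H [M HM].
  exists (psum (fun t => Rabs (a t)) T0 + M); intros n.
  enough (psum (fun t => Rabs (a t)) n
          <= psum (fun t => Rabs (a t)) T0 + psum (fun t => Rabs (c t)) n)
    by (specialize (HM n); lra).
  induction n as [|n IHn]; simpl.
  - pose proof (psum_nonneg (fun t => Rabs (a t)) T0 (fun t => Rabs_pos _)); lra.
  - pose proof (Rabs_pos (c n)).
    destruct (le_lt_dec T0 n) as [HT|HT].
    + specialize (H n HT); pose proof (Rle_abs (c n)); lra.
    + pose proof (psum_incr (fun t => Rabs (a t)) (S n) T0 (fun t => Rabs_pos _) HT).
      pose proof (psum_nonneg (fun t => Rabs (c t)) n (fun t => Rabs_pos _)).
      simpl in *; lra.
Qed.

Lemma abs_summable_le (a c : nat -> R) :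
  (forall t, Rabs (a t) <= c t) -> abs_summable c -> abs_summable a.
Proof. intros H; apply abs_summable_eventually_le with (T0 := 0%nat); auto. Qed.

Lemma abs_summable_abs a : abs_summable a -> abs_summable (fun t => Rabs (a t)).
Proof.
  intros [M H]; exists M; intros n.
  rewrite (psum_ext _ (fun t => Rabs (a t))); auto using Rabs_Rabsolu.
Qed.

Lemma abs_summable_le_abs (a c : nat -> R) :
  (forall t, Rabs (a t) <= Rabs (c t)) -> abs_summable c -> abs_summable a.
Proof. intros H Hc; exact (abs_summable_le _ _ H (abs_summable_abs _ Hc)). Qed.

Lemma abs_summable_plus a b :
  abs_summable a -> abs_summable b -> abs_summable (fun t => a t + b t).
Proof.
  intros [M1 H1] [M2 H2]; exists (M1 + M2); intros n.
  specialize (H1 n); specialize (H2 n).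
  pose proof (psum_le (fun t => Rabs (a t + b t)) (fun t => Rabs (a t) + Rabs (b t)) n
                (fun t => Rabs_triang _ _)).
  rewrite psum_plus in H; lra.
Qed.

Lemma abs_summable_scal c a : abs_summable a -> abs_summable (fun t => c * a t).
Proof.
  intros [M H]; exists (Rabs c * M); intros n.
  rewrite (psum_ext _ (fun t => Rabs c * Rabs (a t))) by (intros; apply Rabs_mult).
  rewrite psum_scal; apply Rmult_le_compat_l; auto using Rabs_pos.
Qed.

Lemma abs_summable_S a : abs_summable a -> abs_summable (fun t => a (S t)).
Proof.
  intros [M H]; exists M; intros n.
  enough (psum (fun t => Rabs (a (S t))) n <= psum (fun t => Rabs (a t)) (S n))
    by (specialize (H (S n)); lra).
  induction n; simpl in *. pose proof (Rabs_pos (a 0%nat)); lra. lra.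
Qed.

Lemma abs_summable_of_S a : abs_summable (fun t => a (S t)) -> abs_summable a.
Proof.
  intros [M H]; exists (Rabs (a 0%nat) + M); intros n.
  assert (Hsplit : forall n, psum (fun t => Rabs (a t)) (S n)
                             = Rabs (a 0%nat) + psum (fun t => Rabs (a (S t))) n).
  { intros m; induction m as [|m IH]; simpl in *; [ring | rewrite IH; ring]. }
  destruct n as [|n].
  - simpl; pose proof (Rabs_pos (a 0%nat)); specialize (H 0%nat); simpl in H; lra.
  - rewrite Hsplit; specialize (H n); lra.
Qed.

Lemma abs_summable_of_add a c : abs_summable (fun t => a (t + c)%nat) -> abs_summable a.
Proof.
  revert a; induction c as [|c IHc]; intros a H.
  - eapply abs_summable_le_abs; [|exact H]; intros t; cbv beta; rewrite Nat.add_0_r; lra.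
  - apply IHc, abs_summable_of_S.
    eapply abs_summable_le_abs; [|exact H]; intros t; simpl.
    rewrite <- plus_n_Sm; lra.
Qed.

Lemma abs_summable_ex_series a : (forall t, 0 <= a t) -> abs_summable a -> ex_series a.
Proof.
  intros Hp [M H].
  assert (Hs : forall n, sum_n a n = psum a (S n)).
  { induction n. rewrite sum_O; simpl; ring. rewrite sum_Sn, IHn; reflexivity. }
  destruct (ex_finite_lim_seq_incr (sum_n a) M) as [L HL].
  - intros n; rewrite !Hs; simpl; specialize (Hp (S n)); simpl in Hp; lra.
  - intros n; rewrite Hs; specialize (H (S n)).
    rewrite (psum_ext (fun t => Rabs (a t)) a) in H; auto.
    intros t; apply Rabs_right, Rle_ge, Hp.
  - exists L; exact HL.
Qed.

Lemma bv_nonincr y : (forall t, y (S t) <= y t) -> (forall t, 0 <= y t) -> bv y.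
Proof.
  intros Hdec Hpos; exists (y 0%nat); intros n.
  assert (Htel : psum (fun t => Rabs (y (S t) - y t)) n = y 0%nat - y n).
  { induction n; simpl. ring.
    rewrite IHn, Rabs_left1 by (specialize (Hdec n); lra); ring. }
  rewrite Htel; specialize (Hpos n); lra.
Qed.

Lemma bv_bounded x : bv x -> exists B, forall t, Rabs (x t) <= B.
Proof.
  intros [M H]; exists (Rabs (x 0%nat) + M); intros t.
  enough (Rabs (x t) <= Rabs (x 0%nat) + psum (fun t => Rabs (x (S t) - x t)) t)
    by (specialize (H t); lra).
  induction t; simpl. lra.
  replace (x (S t)) with (x t + (x (S t) - x t)) at 1 by ring.
  pose proof (Rabs_triang (x t) (x (S t) - x t)); lra.
Qed.

Lemma bv_const c : bv (fun _ => c).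
Proof.
  exists 0; intros n.
  rewrite (psum_ext _ (fun _ => 0)) by (intros; rewrite Rminus_diag; apply Rabs_R0).
  induction n; simpl; lra.
Qed.

Lemma bv_plus x y : bv x -> bv y -> bv (fun t => x t + y t).
Proof.
  intros Hx Hy.
  eapply abs_summable_le; [|exact (abs_summable_plus _ _ (abs_summable_abs _ Hx) (abs_summable_abs _ Hy))].
  intros t; cbv beta.
  replace (x (S t) + y (S t) - (x t + y t)) with ((x (S t) - x t) + (y (S t) - y t)) by ring.
  apply Rabs_triang.
Qed.

Lemma bv_scal c x : bv x -> bv (fun t => c * x t).
Proof.
  intros H; eapply abs_summable_le_abs; [|exact (abs_summable_scal c _ H)].
  intros t; replace (c * x (S t) - c * x t) with (c * (x (S t) - x t)) by ring; lra.
Qed.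

Lemma bv_mult x y : bv x -> bv y -> bv (fun t => x t * y t).
Proof.
  intros Hx Hy.
  destruct (bv_bounded x Hx) as [Bx HBx], (bv_bounded y Hy) as [By HBy].
  eapply abs_summable_le;
    [|exact (abs_summable_plus _ _ (abs_summable_scal Bx _ (abs_summable_abs _ Hy))
                                   (abs_summable_scal By _ (abs_summable_abs _ Hx)))].
  intros t; cbv beta.
  replace (x (S t) * y (S t) - x t * y t)
    with (x (S t) * (y (S t) - y t) + y t * (x (S t) - x t)) by ring.
  eapply Rle_trans; [apply Rabs_triang|]; rewrite !Rabs_mult.
  apply Rplus_le_compat; apply Rmult_le_compat; auto using Rabs_pos, Rle_refl.
Qed.

Lemma bv_inv x c : 0 < c -> (forall t, c <= x t) -> bv x -> bv (fun t => / x t).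
Proof.
  intros Hc Hx H.
  eapply abs_summable_le; [|exact (abs_summable_scal (/ (c * c)) _ (abs_summable_abs _ H))].
  intros t; cbv beta; pose proof (Hx t); pose proof (Hx (S t)).
  replace (/ x (S t) - / x t) with (- (x (S t) - x t) * / (x t * x (S t))) by (field; lra).
  rewrite Rabs_mult, Rabs_Ropp, Rmult_comm, (Rabs_right (/ _)) by (apply Rle_ge, Rlt_le, Rinv_0_lt_compat; nra).
  apply Rmult_le_compat_r; [apply Rabs_pos|]; apply Rinv_le_contravar; nra.
Qed.

Lemma bv_sqrt x c : 0 < c -> (forall t, c <= x t) -> bv x -> bv (fun t => sqrt (x t)).
Proof.
  intros Hc Hx H.
  eapply abs_summable_le; [|exact (abs_summable_scal (/ (2 * sqrt c)) _ (abs_summable_abs _ H))].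
  intros t; cbv beta; pose proof (Hx t); pose proof (Hx (S t)).
  pose proof (sqrt_lt_R0 c Hc).
  assert (sqrt c <= sqrt (x t)) by (apply sqrt_le_1_alt; lra).
  assert (sqrt c <= sqrt (x (S t))) by (apply sqrt_le_1_alt; lra).
  replace (sqrt (x (S t)) - sqrt (x t))
    with ((x (S t) - x t) * / (sqrt (x (S t)) + sqrt (x t))).
  2:{ pose proof (sqrt_sqrt (x t) ltac:(lra)); pose proof (sqrt_sqrt (x (S t)) ltac:(lra)).
      field_simplify_eq; [nra | lra]. }
  rewrite Rabs_mult, Rmult_comm, (Rabs_right (/ _)) by (apply Rle_ge, Rlt_le, Rinv_0_lt_compat; lra).
  apply Rmult_le_compat_r; [apply Rabs_pos|]; apply Rinv_le_contravar; lra.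
Qed.

Lemma inv_pow_3_2_le_telescope X :
  1 <= X -> / ((X + 1) * sqrt (X + 1)) <= 2 * (/ sqrt X - / sqrt (X + 1)).
Proof.
  intros HX; set (u := sqrt X); set (v := sqrt (X + 1)).
  assert (Hu : 0 < u) by (apply sqrt_lt_R0; lra).
  assert (Hv : 0 < v) by (apply sqrt_lt_R0; lra).
  assert (Hu2 : u * u = X) by (apply sqrt_sqrt; lra).
  assert (Hv2 : v * v = X + 1) by (apply sqrt_sqrt; lra).
  assert (u <= v) by (apply sqrt_le_1_alt; lra).
  assert (Hvu : v - u = / (u + v)).
  { apply (Rmult_eq_reg_l (u + v)); [|lra]. rewrite Rinv_r by lra. nra. }
  rewrite <- Hv2.
  replace (2 * (/ u - / v)) with (2 * (v - u) / (u * v)) by (field; lra).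
  rewrite Hvu; replace (2 * / (u + v) / (u * v)) with (/ (u * v * (u + v) / 2)) by (field; lra).
  apply Rinv_le_contravar; nra.
Qed.

Lemma abs_summable_inv_pow_3_2 : abs_summable (fun n => / ((INR n + 1) * sqrt (INR n + 1))).
Proof.
  apply abs_summable_of_S.
  assert (Htel : bv (fun n => 2 * / sqrt (INR n + 1))).
  { apply bv_nonincr; intros t; pose proof (pos_INR t).
    - rewrite S_INR; apply Rmult_le_compat_l; [lra|].
      apply Rinv_le_contravar; [apply sqrt_lt_R0; lra | apply sqrt_le_1_alt; lra].
    - pose proof (Rinv_0_lt_compat _ (sqrt_lt_R0 (INR t + 1) ltac:(lra))); lra. }
  eapply abs_summable_le; [|exact (abs_summable_abs _ Htel)].
  intros t; cbv beta; rewrite !S_INR; pose proof (pos_INR t).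
  assert (Hp : 0 < (INR t + 1 + 1) * sqrt (INR t + 1 + 1))
    by (apply Rmult_lt_0_compat; [lra | apply sqrt_lt_R0; lra]).
  assert (/ sqrt (INR t + 1 + 1) <= / sqrt (INR t + 1))
    by (apply Rinv_le_contravar; [apply sqrt_lt_R0 | apply sqrt_le_1_alt]; lra).
  rewrite Rabs_right by (apply Rle_ge, Rlt_le, Rinv_0_lt_compat, Hp).
  rewrite Rabs_left1 by lra.
  pose proof (inv_pow_3_2_le_telescope (INR t + 1) ltac:(lra)); lra.
Qed.

(** * An energy estimate for a three-term recurrence *)

Lemma quadratic_form_nonneg A B G mu a c R :
  0 < A -> 0 < B -> 0 < mu -> 0 <= a -> 0 <= c -> R * R <= a * c ->
  G * G <= 4 * mu * mu * A * B -> 0 <= mu * (A * a + B * c) + G * R.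
Proof.
  intros HA HB Hmu Ha Hc HR HG.
  assert (Hpos : 0 <= mu * (A * a + B * c)) by (apply Rmult_le_pos; nra).
  assert (Hsq : (G * R) * (G * R) <= (mu * (A * a + B * c)) * (mu * (A * a + B * c))).
  { apply Rle_trans with ((4 * mu * mu * A * B) * (a * c)).
    - replace ((G * R) * (G * R)) with ((G * G) * (R * R)) by ring.
      apply Rmult_le_compat; nra.
    - pose proof (Rle_0_sqr (A * a - B * c)); unfold Rsqr in *.
      replace (4 * mu * mu * A * B * (a * c)) with (mu * mu * (4 * (A * a) * (B * c))) by ring.
      replace ((mu * (A * a + B * c)) * (mu * (A * a + B * c)))
        with (mu * mu * ((A * a + B * c) * (A * a + B * c))) by ring.
      apply Rmult_le_compat_l; nra. }
  destruct (Rle_dec 0 (G * R)); [lra|].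
  enough (- (G * R) <= mu * (A * a + B * c)) by lra.
  apply Rsqr_incr_0_var; unfold Rsqr; nra.
Qed.

Lemma abs_dot_le_sum_sq x1 x2 y1 y2 : Rabs (x1 * y1 + x2 * y2) <= x1 ^ 2 + x2 ^ 2 + (y1 ^ 2 + y2 ^ 2).
Proof.
  pose proof (Rle_0_sqr (x1 - y1)); pose proof (Rle_0_sqr (x2 - y2)).
  pose proof (Rle_0_sqr (x1 + y1)); pose proof (Rle_0_sqr (x2 + y2)); unfold Rsqr in *.
  apply Rabs_le; split; nra.
Qed.

Lemma abs_cross_le_sum_sq x1 x2 y1 y2 : Rabs (x2 * y1 - x1 * y2) <= x1 ^ 2 + x2 ^ 2 + (y1 ^ 2 + y2 ^ 2).
Proof.
  pose proof (Rle_0_sqr (x2 - y1)); pose proof (Rle_0_sqr (x1 - y2)).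
  pose proof (Rle_0_sqr (x2 + y1)); pose proof (Rle_0_sqr (x1 + y2)); unfold Rsqr in *.
  apply Rabs_le; split; nra.
Qed.

Lemma discrete_gronwall (u eps : nat -> R) (T0 : nat) (M : R) :
  (forall t, 0 <= eps t) -> (forall n, psum eps n <= M) ->
  (forall t, (T0 <= t)%nat -> 0 <= u t) ->
  (forall t, (T0 <= t)%nat -> u (S t) <= u t * (1 + eps t)) ->
  forall t, (T0 <= t)%nat -> u t <= u T0 * exp M.
Proof.
  intros Heps HM Hu Hstep t Ht.
  assert (Hind : forall d, u (T0 + d)%nat <= u T0 * exp (psum eps (T0 + d) - psum eps T0)).
  { induction d as [|d IHd].
    - rewrite Nat.add_0_r, Rminus_diag, exp_0; lra.
    - rewrite <- plus_n_Sm; simpl psum.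
      replace (psum eps (T0 + d) + eps (T0 + d)%nat - psum eps T0)
        with ((psum eps (T0 + d) - psum eps T0) + eps (T0 + d)%nat) by ring.
      rewrite exp_plus, <- Rmult_assoc.
      pose proof (Hu (T0 + d)%nat ltac:(lia)); pose proof (exp_ineq1_le (eps (T0 + d)%nat)).
      eapply Rle_trans; [apply Hstep; lia|].
      eapply Rle_trans; [apply Rmult_le_compat_l; eassumption|].
      apply Rmult_le_compat_r; [apply Rlt_le, exp_pos | exact IHd]. }
  replace t with (T0 + (t - T0))%nat by lia.
  eapply Rle_trans; [apply Hind|].
  apply Rmult_le_compat_l; [apply Hu; lia|].
  destruct (Req_dec (psum eps (T0 + (t - T0)) - psum eps T0) M) as [->|]; [lra|].
  left; apply exp_increasing.
  pose proof (HM (T0 + (t - T0))%nat); pose proof (psum_nonneg eps T0 Heps); lra.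
Qed.

Section Energy.

Variables (b g z1 z2 : nat -> R) (s Cb eta : R) (T0 : nat).

(* Real and imaginary parts of  b (S t) z (S (S t)) + (g (S t) + i s) z (S t) + b t z t = 0. *)
Hypothesis rec1 : forall t,
  b (S t) * z1 (S (S t)) = - (b t * z1 t + g (S t) * z1 (S t) - s * z2 (S t)).
Hypothesis rec2 : forall t,
  b (S t) * z2 (S (S t)) = - (b t * z2 t + g (S t) * z2 (S t) + s * z1 (S t)).
Hypothesis b_ge1 : forall t, 1 <= b t.
Hypothesis Cb_ge1 : 1 <= Cb.
Hypothesis b_step : forall t, b (S t) <= Cb * b t.
Hypothesis b_ratio_summable : abs_summable (fun t => b (S t) ^ 2 / (b t * b (S (S t))) - 1).
Hypothesis b_inv_summable : abs_summable (fun t => / b t).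
Hypothesis g_div_b_bv : bv (fun t => g t / b t).
Hypothesis eta_bounds : 0 < eta < 1.
Hypothesis g_subcritical : forall t, (T0 <= t)%nat -> g (S t) ^ 2 <= 4 * (1 - eta) ^ 2 * b t * b (S t).

Let rho t := g t / b t.
Let zsq t := z1 t ^ 2 + z2 t ^ 2.
Let zdot t := z1 t * z1 (S t) + z2 t * z2 (S t).
Let zcross t := z2 t * z1 (S t) - z1 t * z2 (S t).

Definition energy t := b t ^ 2 / b (S t) * zsq t + b t * zsq (S t) + g (S t) * b t / b (S t) * zdot t.

Let coef_sq t := b (S t) ^ 2 / b (S (S t)) - b t + s ^ 2 / b (S t) + g (S t) * (rho (S t) - rho (S (S t))).
Let coef_dot t := b t * (rho (S t) - rho (S (S t))).
Let coef_cross t := 2 * b t * s / b (S t).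

Definition energy_rate t := Rabs (coef_sq t) + Rabs (coef_dot t) + Rabs (coef_cross t).

Let b_pos t : 0 < b t.
Proof. specialize (b_ge1 t); lra. Qed.

Lemma energy_diff t :
  energy (S t) - energy t = coef_sq t * zsq (S t) + coef_dot t * zdot t + coef_cross t * zcross t.
Proof.
  pose proof (b_pos t); pose proof (b_pos (S t)); pose proof (b_pos (S (S t))).
  assert (Hz1 : z1 (S (S t)) = - (b t * z1 t + g (S t) * z1 (S t) - s * z2 (S t)) / b (S t))
    by (rewrite <- rec1; field; lra).
  assert (Hz2 : z2 (S (S t)) = - (b t * z2 t + g (S t) * z2 (S t) + s * z1 (S t)) / b (S t))
    by (rewrite <- rec2; field; lra).
  unfold energy, coef_sq, coef_dot, coef_cross, zsq, zdot, zcross, rho.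
  rewrite Hz1, Hz2; field; repeat split; apply Rgt_not_eq; lra.
Qed.

Lemma energy_step t : Rabs (energy (S t) - energy t) <= energy_rate t * (zsq t + zsq (S t)).
Proof.
  rewrite energy_diff; unfold energy_rate.
  assert (Hsq : 0 <= zsq t /\ 0 <= zsq (S t)) by (unfold zsq; split; nra).
  pose proof (abs_dot_le_sum_sq (z1 t) (z2 t) (z1 (S t)) (z2 (S t))).
  pose proof (abs_cross_le_sum_sq (z1 t) (z2 t) (z1 (S t)) (z2 (S t))).
  fold (zdot t) (zcross t) (zsq t) (zsq (S t)) in *.
  pose proof (Rabs_pos (coef_sq t)); pose proof (Rabs_pos (coef_dot t));
    pose proof (Rabs_pos (coef_cross t)).
  eapply Rle_trans; [apply Rabs_triang|].
  eapply Rle_trans; [apply Rplus_le_compat_r, Rabs_triang|].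
  rewrite !Rabs_mult, (Rabs_right (zsq (S t))) by lra.
  assert (Rabs (coef_dot t) * Rabs (zdot t) <= Rabs (coef_dot t) * (zsq t + zsq (S t)))
    by (apply Rmult_le_compat_l; lra).
  assert (Rabs (coef_cross t) * Rabs (zcross t) <= Rabs (coef_cross t) * (zsq t + zsq (S t)))
    by (apply Rmult_le_compat_l; lra).
  nra.
Qed.

Lemma energy_rate_div_le Brho t : (forall t, Rabs (rho t) <= Brho) ->
  energy_rate t / b t <=
    Rabs (b (S t) ^ 2 / (b t * b (S (S t))) - 1) + s ^ 2 * / b (S t)
    + (Brho * Cb + 1) * Rabs (rho (S (S t)) - rho (S t)) + 2 * Rabs s * / b (S t).
Proof.
  intros Hrho.
  pose proof (b_pos t); pose proof (b_pos (S t)); pose proof (b_pos (S (S t))); pose proof (b_ge1 t).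
  assert (Hdiv : forall x, Rabs x / b t = Rabs (x / b t))
    by (intros x; unfold Rdiv; rewrite Rabs_mult, (Rabs_right (/ b t));
        [reflexivity | apply Rle_ge, Rlt_le, Rinv_0_lt_compat; lra]).
  unfold energy_rate; replace ((Rabs (coef_sq t) + Rabs (coef_dot t) + Rabs (coef_cross t)) / b t)
    with (Rabs (coef_sq t) / b t + Rabs (coef_dot t) / b t + Rabs (coef_cross t) / b t) by (field; lra).
  rewrite !Hdiv; unfold coef_sq, coef_dot, coef_cross.
  replace ((b (S t) ^ 2 / b (S (S t)) - b t + s ^ 2 / b (S t) + g (S t) * (rho (S t) - rho (S (S t)))) / b t)
    with ((b (S t) ^ 2 / (b t * b (S (S t))) - 1) + s ^ 2 * / (b t * b (S t))
          + (rho (S t) * (b (S t) / b t)) * (rho (S t) - rho (S (S t))))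
    by (unfold rho; field; repeat split; apply Rgt_not_eq; lra).
  replace (b t * (rho (S t) - rho (S (S t))) / b t) with (rho (S t) - rho (S (S t))) by (field; lra).
  replace (2 * b t * s / b (S t) / b t) with (2 * s * / b (S t)) by (field; lra).
  assert (Hsym : Rabs (rho (S t) - rho (S (S t))) = Rabs (rho (S (S t)) - rho (S t)))
    by (rewrite <- Rabs_Ropp; f_equal; ring).
  assert (Hratio : Rabs (rho (S t) * (b (S t) / b t)) <= Brho * Cb).
  { rewrite Rabs_mult, (Rabs_right (b (S t) / b t)) by (apply Rle_ge, Rlt_le, Rdiv_lt_0_compat; lra).
    apply Rmult_le_compat; [apply Rabs_pos | apply Rlt_le, Rdiv_lt_0_compat; lra | apply Hrho |].
    apply (Rmult_le_reg_r (b t)); [lra|].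
    replace (b (S t) / b t * b t) with (b (S t)) by (field; lra); apply b_step. }
  assert (Hs2 : Rabs (s ^ 2 * / (b t * b (S t))) <= s ^ 2 * / b (S t)).
  { rewrite Rabs_mult, (Rabs_right (s ^ 2)) by (apply Rle_ge, pow2_ge_0).
    apply Rmult_le_compat_l; [apply pow2_ge_0|].
    rewrite Rabs_right by (apply Rle_ge, Rlt_le, Rinv_0_lt_compat; nra).
    apply Rinv_le_contravar; nra. }
  assert (Hcross : Rabs (2 * s * / b (S t)) = 2 * Rabs s * / b (S t)).
  { rewrite !Rabs_mult, (Rabs_right 2), (Rabs_right (/ b (S t))); auto with real.
    apply Rle_ge, Rlt_le, Rinv_0_lt_compat; lra. }
  assert (Hmix : Rabs (rho (S t) * (b (S t) / b t) * (rho (S t) - rho (S (S t))))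
                 <= Brho * Cb * Rabs (rho (S (S t)) - rho (S t)))
    by (rewrite Rabs_mult, <- Hsym; apply Rmult_le_compat_r; auto using Rabs_pos).
  pose proof (Rabs_triang (b (S t) ^ 2 / (b t * b (S (S t))) - 1 + s ^ 2 * / (b t * b (S t)))
               (rho (S t) * (b (S t) / b t) * (rho (S t) - rho (S (S t))))).
  pose proof (Rabs_triang (b (S t) ^ 2 / (b t * b (S (S t))) - 1) (s ^ 2 * / (b t * b (S t)))).
  rewrite Hcross, Hsym; lra.
Qed.

Lemma abs_summable_energy_rate : abs_summable (fun t => energy_rate t / b t).
Proof.
  destruct (bv_bounded _ g_div_b_bv) as [Brho HBrho].
  eapply abs_summable_le; [intros t|].
  - rewrite Rabs_right; [apply (energy_rate_div_le Brho t HBrho)|].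
    apply Rle_ge, Rdiv_le_0_compat; [|apply b_pos].
    unfold energy_rate; pose proof (Rabs_pos (coef_sq t)); pose proof (Rabs_pos (coef_dot t));
      pose proof (Rabs_pos (coef_cross t)); lra.
  - repeat apply abs_summable_plus.
    + apply abs_summable_abs, b_ratio_summable.
    + apply abs_summable_scal, (abs_summable_S (fun t => / b t)), b_inv_summable.
    + apply abs_summable_scal, abs_summable_abs, (abs_summable_S (fun t => rho (S t) - rho t)), g_div_b_bv.
    + apply abs_summable_scal, (abs_summable_S (fun t => / b t)), b_inv_summable.
Qed.

Lemma energy_coercive t : (T0 <= t)%nat ->
  eta * (b t / Cb) * (zsq t + zsq (S t)) <= energy t /\ eta * b t * zsq (S t) <= energy t.
Proof.
  intros Ht.
  pose proof (b_pos t) as Hb0; pose proof (b_pos (S t)) as Hb1.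
  set (A := b t ^ 2 / b (S t)); set (G := g (S t) * b t / b (S t)).
  assert (HA : 0 < A) by (unfold A; apply Rdiv_lt_0_compat; nra).
  assert (Hz : 0 <= zsq t /\ 0 <= zsq (S t)) by (unfold zsq; split; nra).
  assert (Hdot : zdot t * zdot t <= zsq t * zsq (S t)).
  { unfold zdot, zsq; pose proof (Rle_0_sqr (z1 t * z2 (S t) - z2 t * z1 (S t))); unfold Rsqr in *; nra. }
  assert (HG : G * G <= 4 * (1 - eta) * (1 - eta) * A * b t).
  { unfold G, A.
    replace (g (S t) * b t / b (S t) * (g (S t) * b t / b (S t)))
      with (g (S t) ^ 2 * (b t ^ 2 / (b (S t) * b (S t)))) by (field; lra).
    apply Rle_trans with (4 * (1 - eta) ^ 2 * b t * b (S t) * (b t ^ 2 / (b (S t) * b (S t)))).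
    - apply Rmult_le_compat_r; [apply Rlt_le, Rdiv_lt_0_compat; nra | auto].
    - right; field; lra. }
  pose proof (quadratic_form_nonneg A (b t) G (1 - eta) (zsq t) (zsq (S t)) (zdot t)
                HA Hb0 ltac:(lra) (proj1 Hz) (proj2 Hz) Hdot HG).
  assert (HE : energy t = A * zsq t + b t * zsq (S t) + G * zdot t)
    by (unfold energy, A, G; ring).
  assert (HAb : b t / Cb <= A).
  { unfold A; apply (Rmult_le_reg_r (Cb * b (S t))); [nra|].
    replace (b t / Cb * (Cb * b (S t))) with (b t * b (S t)) by (field; lra).
    replace (b t ^ 2 / b (S t) * (Cb * b (S t))) with (b t * (Cb * b t)) by (field; lra).
    apply Rmult_le_compat_l; [lra | apply b_step]. }
  assert (Hbb : b t / Cb <= b t).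
  { apply (Rmult_le_reg_r Cb); [lra|]; replace (b t / Cb * Cb) with (b t) by (field; lra); nra. }
  split; rewrite HE.
  - assert (eta * (b t / Cb) * (zsq t + zsq (S t)) <= eta * (A * zsq t + b t * zsq (S t)))
      by (rewrite Rmult_assoc; apply Rmult_le_compat_l; nra).
    nra.
  - assert (0 <= eta * (A * zsq t)) by (apply Rmult_le_pos; nra).
    nra.
Qed.

Lemma energy_nonneg t : (T0 <= t)%nat -> 0 <= energy t.
Proof.
  intros Ht; destruct (energy_coercive t Ht) as [H _].
  pose proof (b_pos t).
  assert (0 <= zsq t + zsq (S t)) by (unfold zsq; nra).
  assert (0 <= eta * (b t / Cb)) by (apply Rmult_le_pos; [lra | apply Rdiv_le_0_compat; lra]).
  nra.
Qed.

Lemma energy_growth t : (T0 <= t)%nat ->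
  energy (S t) <= energy t * (1 + Cb / eta * (energy_rate t / b t)).
Proof.
  intros Ht; destruct (energy_coercive t Ht) as [Hlow _].
  pose proof (energy_step t); pose proof (b_pos t); pose proof (energy_nonneg t Ht).
  assert (Hrate : 0 <= energy_rate t).
  { unfold energy_rate; pose proof (Rabs_pos (coef_sq t)); pose proof (Rabs_pos (coef_dot t));
      pose proof (Rabs_pos (coef_cross t)); lra. }
  assert (energy_rate t * (zsq t + zsq (S t))
          <= Cb / eta * (energy_rate t / b t) * (eta * (b t / Cb) * (zsq t + zsq (S t)))).
  { right; field; repeat split; apply Rgt_not_eq; lra. }
  assert (Cb / eta * (energy_rate t / b t) * (eta * (b t / Cb) * (zsq t + zsq (S t)))
          <= Cb / eta * (energy_rate t / b t) * energy t).
  { apply Rmult_le_compat_l; auto.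
    apply Rmult_le_pos; apply Rdiv_le_0_compat; lra. }
  pose proof (Rle_abs (energy (S t) - energy t)); nra.
Qed.

Lemma energy_bound : exists K, forall t, (T0 <= t)%nat -> zsq (S t) <= K / b t.
Proof.
  set (eps t := Cb / eta * (energy_rate t / b t)).
  assert (Heps : forall t, 0 <= eps t).
  { intros t; unfold eps, energy_rate; pose proof (b_pos t).
    pose proof (Rabs_pos (coef_sq t)); pose proof (Rabs_pos (coef_dot t));
      pose proof (Rabs_pos (coef_cross t)).
    apply Rmult_le_pos; apply Rdiv_le_0_compat; lra. }
  destruct (abs_summable_scal (Cb / eta) _ abs_summable_energy_rate) as [M HM].
  assert (HMeps : forall n, psum eps n <= M).
  { intros n; rewrite (psum_ext eps (fun t => Rabs (Cb / eta * (energy_rate t / b t)))); auto.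
    intros t; rewrite Rabs_right; [reflexivity | apply Rle_ge, Heps]. }
  exists (energy T0 * exp M / eta); intros t Ht.
  destruct (energy_coercive t Ht) as [_ Hlow]; pose proof (b_pos t).
  pose proof (discrete_gronwall energy eps T0 M Heps HMeps energy_nonneg energy_growth t Ht).
  apply (Rmult_le_reg_l (eta * b t)); [nra|].
  replace (eta * b t * (energy T0 * exp M / eta / b t)) with (energy T0 * exp M) by (field; lra).
  lra.
Qed.

End Energy.

(** * Matrix elements of the ladder monomials *)

Ltac ceq := apply injective_projections; simpl; ring.

Fixpoint ann_coef (q x : nat) : R :=
  match q with O => 1 | S q => sqrt (INR (S x)) * ann_coef q (S x) end.

Fixpoint cre_coef (p n : nat) : R :=
  match p with
  | O => 1
  | S p => match n with O => 0 | S n' => sqrt (INR (S n')) * cre_coef p n' end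
  end.

Lemma iter_op_a q psi n : Nat.iter q op_a psi n = (ann_coef q n * psi (n + q)%nat)%C.
Proof.
  revert n; induction q as [|q IHq]; intros n; simpl.
  - rewrite Nat.add_0_r; ceq.
  - unfold op_a; rewrite IHq, <- plus_n_Sm, RtoC_mult; simpl; ring.
Qed.

Lemma iter_op_adag p chi n : Nat.iter p op_adag chi n = (cre_coef p n * chi (n - p)%nat)%C.
Proof.
  revert n; induction p as [|p IHp]; intros [|n]; simpl; try ceq.
  rewrite IHp; ceq.
Qed.

Lemma mono_apply p q psi n :
  mono p q psi n = (cre_coef p n * ann_coef q (n - p) * psi (n - p + q)%nat)%C.
Proof. unfold mono; rewrite iter_op_adag, iter_op_a; ring. Qed.

Lemma cre_coef_lt p n : (n < p)%nat -> cre_coef p n = 0.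
Proof.
  revert n; induction p as [|p IHp]; intros [|n] H; simpl; try lia; auto.
  rewrite IHp by lia; ring.
Qed.

Lemma ann_coef_pos q x : 0 < ann_coef q x.
Proof.
  revert x; induction q as [|q IHq]; intros x; cbn [ann_coef]; [lra|].
  apply Rmult_lt_0_compat; auto; apply sqrt_lt_R0, lt_0_INR; lia.
Qed.

Lemma cre_coef_pos p n : (p <= n)%nat -> 0 < cre_coef p n.
Proof.
  revert n; induction p as [|p IHp]; intros [|n] H; cbn [cre_coef]; try lia; [lra|lra|].
  apply Rmult_lt_0_compat; [apply sqrt_lt_R0, lt_0_INR; lia | apply IHp; lia].
Qed.

Lemma ann_coef_S_last q x : ann_coef (S q) x = ann_coef q x * sqrt (INR (x + S q)).
Proof.
  revert x; induction q as [|q IHq]; intros x.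
  - rewrite Nat.add_1_r; simpl; ring.
  - change (ann_coef (S (S q)) x) with (sqrt (INR (S x)) * ann_coef (S q) (S x)).
    rewrite IHq; replace (S x + S q)%nat with (x + S (S q))%nat by lia; simpl; ring.
Qed.

Lemma cre_coef_add q x : cre_coef q (x + q) = ann_coef q x.
Proof.
  induction q as [|q IHq]; [reflexivity|].
  rewrite ann_coef_S_last, <- IHq, <- plus_n_Sm; simpl; ring.
Qed.

Section Band.

Variables k l : nat.
Hypothesis l_le_k : (l <= k)%nat.

Definition band_coef (j : nat) : R := cre_coef l j * ann_coef k (j - l).

Lemma band_coef_lt j : (j < l)%nat -> band_coef j = 0.
Proof. intros; unfold band_coef; rewrite cre_coef_lt; auto; ring. Qed.

Lemma band_coef_pos j : (l <= j)%nat -> 0 < band_coef j.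
Proof. intros; apply Rmult_lt_0_compat; [apply cre_coef_pos; auto | apply ann_coef_pos]. Qed.

Lemma mono_lk_apply psi n : mono l k psi n = (band_coef n * psi (n + (k - l))%nat)%C.
Proof.
  rewrite mono_apply; unfold band_coef; destruct (le_lt_dec l n).
  - replace (n - l + k)%nat with (n + (k - l))%nat by lia; now rewrite RtoC_mult.
  - rewrite cre_coef_lt by auto; ceq.
Qed.

Lemma mono_kl_apply psi n :
  mono k l psi n = (RtoC (if (k - l <=? n)%nat then band_coef (n - (k - l)) else 0) * psi (n - (k - l))%nat)%C.
Proof.
  rewrite mono_apply; destruct (le_lt_dec k n) as [Hkn|Hnk].
  - replace (k - l <=? n)%nat with true by (symmetry; apply Nat.leb_le; lia).
    replace (n - k + l)%nat with (n - (k - l))%nat by lia.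
    unfold band_coef; replace n with (n - k + k)%nat at 1 by lia.
    replace (n - (k - l))%nat with (n - k + l)%nat by lia.
    rewrite !cre_coef_add, Nat.add_sub, RtoC_mult; ring.
  - rewrite cre_coef_lt by auto; destruct (k - l <=? n)%nat eqn:E.
    + apply Nat.leb_le in E; rewrite band_coef_lt by lia; ceq.
    + ceq.
Qed.

End Band.

(** * Growth of the band coefficients *)

Definition lprod {T} (L : list T) (F : T -> R) : R := fold_right (fun c acc => F c * acc) 1 L.

Lemma lprod_cons {T} (c : T) L F : lprod (c :: L) F = F c * lprod L F.
Proof. reflexivity. Qed.

Lemma lprod_app {T} (L1 L2 : list T) F : lprod (L1 ++ L2) F = lprod L1 F * lprod L2 F.
Proof. induction L1 as [|c L1 IH]; simpl. ring. unfold lprod in *; simpl; rewrite IH; ring. Qed.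

Lemma lprod_map {T U} (g : T -> U) (L : list T) F : lprod (map g L) F = lprod L (fun c => F (g c)).
Proof. induction L as [|c L IH]; auto. unfold lprod in *; simpl; now rewrite IH. Qed.

Lemma lprod_ext {T} (L : list T) F G : (forall c, In c L -> F c = G c) -> lprod L F = lprod L G.
Proof.
  induction L as [|c L IH]; intros H; simpl; auto.
  unfold lprod in *; simpl; rewrite H, IH; auto.
  - intros c' Hc'; apply H; right; auto.
  - left; auto.
Qed.

Lemma lprod_seq_S s q F : lprod (seq (S s) q) F = lprod (seq s q) (fun i => F (S i)).
Proof. now rewrite <- seq_shift, lprod_map. Qed.

Lemma lprod_mult {T} (L : list T) F G : lprod L (fun c => F c * G c) = lprod L F * lprod L G.
Proof. induction L as [|c L IH]; unfold lprod in *; simpl. ring. rewrite IH; ring. Qed.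

Lemma lprod_const {T} (L : list T) a : lprod L (fun _ => a) = a ^ length L.
Proof. induction L as [|c L IH]; unfold lprod in *; simpl. reflexivity. rewrite IH; ring. Qed.

Lemma lprod_le {T} (L : list T) F G :
  (forall c, In c L -> 0 <= F c <= G c) -> lprod L F <= lprod L G.
Proof.
  induction L as [|c L IH]; intros H; unfold lprod in *; simpl. lra.
  assert (HF : 0 <= fold_right (fun c acc => F c * acc) 1 L).
  { assert (H' : forall c, In c L -> 0 <= F c) by (intros c' Hc'; apply H; right; auto).
    clear IH H; induction L as [|c' L IHL]; simpl. lra.
    apply Rmult_le_pos; [apply H'; left | apply IHL; intros; apply H'; right]; auto. }
  apply Rmult_le_compat; auto; try apply H; try (left; reflexivity).
  apply IH; intros; apply H; right; auto.
Qed.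

Lemma cre_coef_sq p n : (p <= n)%nat -> cre_coef p n ^ 2 = lprod (seq 0 p) (fun i => INR n - INR i).
Proof.
  revert n; induction p as [|p IHp]; intros [|n] H; try lia; try (simpl; ring).
  cbn [cre_coef]; rewrite Rpow_mult_distr, IHp, pow2_sqrt by (auto using pos_INR; lia).
  change (seq 0 (S p)) with (0%nat :: seq 1 p); rewrite lprod_cons, lprod_seq_S.
  rewrite (lprod_ext _ (fun i => INR (S n) - INR (S i)) (fun i => INR n - INR i))
    by (intros i _; rewrite !S_INR; ring).
  simpl (INR 0); ring.
Qed.

Lemma ann_coef_sq q x : ann_coef q x ^ 2 = lprod (seq 1 q) (fun i => INR x + INR i).
Proof.
  revert x; induction q as [|q IHq]; intros x; [simpl; ring|].
  cbn [ann_coef]; rewrite Rpow_mult_distr, IHq, pow2_sqrt by apply pos_INR.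
  change (seq 1 (S q)) with (1%nat :: seq 2 q); rewrite lprod_cons, !lprod_seq_S.
  rewrite (lprod_ext _ (fun i => INR x + INR (S (S i))) (fun i => INR (S x) + INR (S i)))
    by (intros i _; rewrite !S_INR; ring).
  rewrite S_INR; simpl (INR 1); ring.
Qed.

Section BandPoly.

Variables k l : nat.

Definition band_roots : list R := map INR (seq 0 l) ++ map (fun i => INR l - INR i) (seq 1 k).

Definition band_poly (x : R) : R := lprod band_roots (fun c => x - c).

Lemma band_roots_length : length band_roots = (l + k)%nat.
Proof. unfold band_roots; now rewrite length_app, !length_map, !length_seq. Qed.

Lemma band_roots_le c : In c band_roots -> c <= INR l - 1.
Proof.
  unfold band_roots; intros H; apply in_app_or in H.
  destruct H as [H|H]; apply in_map_iff in H; destruct H as [i [<- Hi]]; apply in_seq in Hi.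
  - assert (Hle : (i + 1 <= l)%nat) by lia; apply le_INR in Hle; rewrite plus_INR in Hle; simpl in Hle; lra.
  - assert (Hle : (1 <= i)%nat) by lia; apply le_INR in Hle; simpl in Hle; lra.
Qed.

Lemma band_coef_sq j : (l <= j)%nat -> band_coef k l j ^ 2 = band_poly (INR j).
Proof.
  intros H; unfold band_coef, band_poly, band_roots.
  rewrite Rpow_mult_distr, cre_coef_sq, ann_coef_sq, lprod_app, !lprod_map by auto.
  f_equal; apply lprod_ext; intros i _; rewrite minus_INR by auto; ring.
Qed.

Lemma band_poly_ge_pow x : INR l <= x -> (x - INR l + 1) ^ (l + k) <= band_poly x.
Proof.
  intros H; unfold band_poly; rewrite <- band_roots_length, <- lprod_const.
  apply lprod_le; intros c Hc; apply band_roots_le in Hc; lra.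
Qed.

Lemma band_poly_ge1 x : INR l <= x -> 1 <= band_poly x.
Proof.
  intros H; eapply Rle_trans; [|apply band_poly_ge_pow; auto].
  apply pow_R1_Rle; lra.
Qed.

Lemma band_poly_shift_le x M : INR l <= x -> 0 <= M ->
  band_poly (x + M) <= (1 + M) ^ (l + k) * band_poly x.
Proof.
  intros H HM; unfold band_poly; rewrite <- band_roots_length, <- lprod_const, <- lprod_mult.
  apply lprod_le; intros c Hc; apply band_roots_le in Hc; split; nra.
Qed.

Lemma band_poly_mono x M : INR l <= x -> 0 <= M -> band_poly x <= band_poly (x + M).
Proof. intros H HM; apply lprod_le; intros c Hc; apply band_roots_le in Hc; lra. Qed.

Lemma band_poly_shift_ratio x M : INR l <= x ->
  band_poly (x + M) = band_poly x * lprod band_roots (fun c => 1 + M / (x - c)).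
Proof.
  intros H; unfold band_poly; rewrite <- lprod_mult.
  apply lprod_ext; intros c Hc; apply band_roots_le in Hc; field; lra.
Qed.

Lemma band_poly_factor x : 0 < x ->
  band_poly x = x ^ (l + k) * lprod band_roots (fun c => 1 - c / x).
Proof.
  intros H; unfold band_poly; rewrite <- band_roots_length, <- lprod_const, <- lprod_mult.
  apply lprod_ext; intros c _; field; lra.
Qed.

Lemma normalized_band_poly_lower x : INR l + 1 <= x ->
  (/ (INR l + 1)) ^ (l + k) <= lprod band_roots (fun c => 1 - c / x).
Proof.
  intros H; rewrite <- band_roots_length, <- lprod_const.
  apply lprod_le; intros c Hc; apply band_roots_le in Hc; pose proof (pos_INR l).
  split; [apply Rlt_le, Rinv_0_lt_compat; lra|].
  assert (c / x <= INR l / x) by (apply Rmult_le_compat_r; [apply Rlt_le, Rinv_0_lt_compat|]; lra).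
  assert (INR l / x <= INR l / (INR l + 1)) by (apply Rmult_le_compat_l; [|apply Rinv_le_contravar]; lra).
  replace (/ (INR l + 1)) with (1 - INR l / (INR l + 1)) by (field; lra); lra.
Qed.

Hypothesis k_plus_l_ge3 : (3 <= k + l)%nat.

Lemma band_coef_lower j u : (l + u <= j)%nat ->
  (INR u + 1) * sqrt (INR u + 1) <= band_coef k l j.
Proof.
  intros H; pose proof (pos_INR u).
  assert (Hu : INR u + 1 <= INR j - INR l + 1) by (apply le_INR in H; rewrite plus_INR in H; lra).
  apply Rsqr_incr_0_var; [|apply Rlt_le, band_coef_pos; lia].
  unfold Rsqr; replace (band_coef k l j * band_coef k l j) with (band_coef k l j ^ 2) by ring.
  rewrite band_coef_sq by lia.
  eapply Rle_trans; [|apply band_poly_ge_pow; apply le_INR; lia].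
  replace ((INR u + 1) * sqrt (INR u + 1) * ((INR u + 1) * sqrt (INR u + 1)))
    with ((INR u + 1) ^ 2 * (sqrt (INR u + 1) * sqrt (INR u + 1))) by ring.
  rewrite sqrt_sqrt by lra.
  apply Rle_trans with ((INR j - INR l + 1) ^ 3).
  - replace ((INR u + 1) ^ 2 * (INR u + 1)) with ((INR u + 1) ^ 3) by ring.
    apply pow_incr; lra.
  - apply Rle_pow; [lra | lia].
Qed.

End BandPoly.

(** * Consequences of an asymptotic expansion *)

Lemma bv_lprod {T} (L : list T) (F : T -> nat -> R) :
  (forall c, In c L -> bv (F c)) -> bv (fun t => lprod L (fun c => F c t)).
Proof.
  induction L as [|c L IH]; intros H; unfold lprod in *; simpl; [apply bv_const|].
  apply bv_mult; [apply H; left; auto | apply IH; intros; apply H; right; auto].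
Qed.

Lemma Rpower_pos x e : 0 < Rpower x e.
Proof. apply exp_pos. Qed.

Lemma Rpower_le_of_nonpos x y e : 0 < x <= y -> e <= 0 -> Rpower y e <= Rpower x e.
Proof.
  intros Hxy He; replace e with (- - e) by ring; rewrite (Rpower_Ropp x), (Rpower_Ropp y).
  apply Rinv_le_contravar; [apply Rpower_pos | apply Rle_Rpower_l; lra].
Qed.

Lemma Rpower_neg_half_sq x q : 0 < x -> Rpower x (- INR q / 2) ^ 2 = / x ^ q.
Proof.
  intros Hx; simpl; rewrite Rmult_1_r, <- Rpower_plus.
  replace (- INR q / 2 + - INR q / 2) with (- INR q) by field.
  rewrite Rpower_Ropp, Rpower_pow; auto.
Qed.

Lemma Rpower_neg_half x : 0 < x -> Rpower x (- INR 1 / 2) = / sqrt x.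
Proof.
  intros Hx; replace (- INR 1 / 2) with (- / 2) by (simpl; field).
  rewrite Rpower_Ropp, Rpower_sqrt; auto.
Qed.

Lemma Rpower_neg_3_2 x : 0 < x -> Rpower x (- INR (2 + 1) / 2) = / (x * sqrt x).
Proof.
  intros Hx; replace (- INR (2 + 1) / 2) with (- (1 + / 2)) by (simpl; field).
  rewrite Rpower_Ropp, Rpower_plus, Rpower_sqrt, Rpower_1; auto.
Qed.

Lemma Rpower_zero_exponent x : Rpower x (- INR 0 / 2) = 1.
Proof. replace (- INR 0 / 2) with 0 by (simpl; field); unfold Rpower; rewrite Rmult_0_l; apply exp_0. Qed.

Section AboveIdentity.

Variable x : nat -> R.
Hypothesis x_ge : forall t, INR t + 1 <= x t.
Hypothesis x_incr : forall t, x t <= x (S t).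

Let x_pos t : 0 < x t.
Proof. pose proof (x_ge t); pose proof (pos_INR t); lra. Qed.

Lemma abs_summable_Rpower_3_2 : abs_summable (fun t => Rpower (x t) (- INR (2 + 1) / 2)).
Proof.
  eapply abs_summable_le; [|exact (abs_summable_abs _ abs_summable_inv_pow_3_2)].
  intros t; pose proof (pos_INR t); pose proof (x_ge t).
  assert (Hp : 0 < (INR t + 1) * sqrt (INR t + 1))
    by (apply Rmult_lt_0_compat; [lra | apply sqrt_lt_R0; lra]).
  rewrite Rabs_right by (apply Rle_ge, Rlt_le, Rpower_pos).
  rewrite Rabs_right by (apply Rle_ge, Rlt_le, Rinv_0_lt_compat, Hp).
  rewrite Rpower_neg_3_2 by apply x_pos.
  apply Rinv_le_contravar; auto.
  apply Rmult_le_compat; try lra; [apply sqrt_pos | apply sqrt_le_1_alt; lra].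
Qed.

Lemma bv_Rpower e : e <= 0 -> bv (fun t => Rpower (x t) e).
Proof.
  intros He; apply bv_nonincr; intros t.
  - apply Rpower_le_of_nonpos; [split; [apply x_pos | apply x_incr] | exact He].
  - apply Rlt_le, Rpower_pos.
Qed.

Lemma bv_inv_sub c : (forall t, c < x t) -> bv (fun t => / (x t - c)).
Proof.
  intros Hc; apply bv_nonincr; intros t; specialize (Hc t).
  - apply Rinv_le_contravar; [lra | specialize (x_incr t); lra].
  - apply Rlt_le, Rinv_0_lt_compat; lra.
Qed.

Lemma bv_asymp_partial_sum (lam : nat -> R) N :
  bv (fun t => sum_f_R0 (fun s => lam s * Rpower (x t) (- INR s / 2)) N).
Proof.
  assert (Hterm : forall s, bv (fun t => lam s * Rpower (x t) (- INR s / 2)))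
    by (intros s; apply bv_scal, bv_Rpower; pose proof (pos_INR s); lra).
  induction N as [|N IHN]; cbn [sum_f_R0]; [apply Hterm | apply bv_plus; auto].
Qed.

(* Three terms of the expansion suffice: the remainder is O(x^(-3/2)), which is summable. *)
Lemma bv_of_asymp (phi lam : nat -> R) (C : R) (T : nat) :
  (forall t, (T <= t)%nat ->
     Rabs (phi t - sum_f_R0 (fun s => lam s * Rpower (x t) (- INR s / 2)) 2)
       <= C * Rpower (x t) (- INR (2 + 1) / 2)) ->
  bv phi.
Proof.
  intros H.
  set (P t := sum_f_R0 (fun s => lam s * Rpower (x t) (- INR s / 2)) 2).
  set (rem t := C * Rpower (x t) (- INR (2 + 1) / 2)).
  assert (Hrem : bv (fun t => phi t - P t)).
  { apply abs_summable_eventually_le with (T0 := T) (c := fun t => rem (S t) + rem t).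
    - intros t Ht; pose proof (H t Ht); pose proof (H (S t) ltac:(lia)).
      replace (phi (S t) - P (S t) - (phi t - P t)) with ((phi (S t) - P (S t)) + - (phi t - P t)) by ring.
      eapply Rle_trans; [apply Rabs_triang|]; rewrite Rabs_Ropp; unfold P, rem; lra.
    - apply abs_summable_plus; apply abs_summable_scal;
        [apply (abs_summable_S (fun t => Rpower (x t) (- INR (2 + 1) / 2)))|];
        apply abs_summable_Rpower_3_2. }
  eapply abs_summable_le_abs; [|exact (bv_plus _ _ (bv_asymp_partial_sum lam 2) Hrem)].
  intros t; cbv beta; fold (P t) (P (S t)).
  replace (P (S t) + (phi (S t) - P (S t)) - (P t + (phi t - P t))) with (phi (S t) - phi t) by ring.
  lra.
Qed.

End AboveIdentity.

Lemma asymp_expansion_leading_le (g lam : nat -> R) (eps : R) :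
  asymp_expansion g lam -> 0 < eps ->
  exists N, forall n, (N <= n)%nat -> g n <= lam 0%nat + eps.
Proof.
  intros Has Heps; destruct (Has 0%nat) as [C [N0 HN0]].
  destruct (INR_archimed 1 (Rmax 1 ((C / eps) ^ 2))) as [N1 HN1]; [lra|].
  exists (max 1 (max N0 N1)); intros n Hn.
  assert (Hn1 : 1 <= INR n) by (apply (le_INR 1); lia).
  assert (HnN1 : INR N1 <= INR n) by (apply le_INR; lia).
  pose proof (Rmax_r 1 ((C / eps) ^ 2)).
  specialize (HN0 n ltac:(lia)); cbn [sum_f_R0] in HN0.
  rewrite Rpower_zero_exponent, Rmult_1_r in HN0.
  replace (0 + 1)%nat with 1%nat in HN0 by reflexivity.
  rewrite Rpower_neg_half in HN0 by lra.
  assert (Hs : 0 < sqrt (INR n)) by (apply sqrt_lt_R0; lra).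
  enough (C * / sqrt (INR n) <= eps) by (pose proof (Rle_abs (g n - lam 0%nat)); lra).
  destruct (Rle_dec C 0).
  - pose proof (Rinv_0_lt_compat _ Hs); nra.
  - assert (C / eps <= sqrt (INR n)).
    { rewrite <- (sqrt_pow2 (C / eps)) by (apply Rlt_le, Rdiv_lt_0_compat; lra).
      apply sqrt_le_1_alt; lra. }
    apply (Rmult_le_reg_r (sqrt (INR n))); [lra|].
    rewrite Rmult_assoc, Rinv_l by lra.
    apply (Rmult_le_reg_r (/ eps)); [apply Rinv_0_lt_compat; lra|].
    replace (eps * sqrt (INR n) * / eps) with (sqrt (INR n)) by (field; lra).
    unfold Rdiv in *; lra.
Qed.

(** * Solutions along a residue class *)

Lemma pow_1_plus_le_chord u q : 0 <= u <= 1 -> (1 + u) ^ q <= 1 + u * (2 ^ q - 1).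
Proof.
  intros Hu; induction q as [|q IHq]; simpl; [lra|].
  assert (1 <= 2 ^ q) by (apply pow_R1_Rle; lra).
  apply Rle_trans with ((1 + u) * (1 + u * (2 ^ q - 1))); [apply Rmult_le_compat_l; lra|].
  assert (0 <= u * (1 - u) * (2 ^ q - 1)) by (apply Rmult_le_pos; nra).
  nra.
Qed.

Lemma Cmult_eq_0_l (a z : C) : a <> 0%C -> (a * z)%C = 0%C -> z = 0%C.
Proof. intros Ha H; replace z with (/ a * (a * z))%C by (field; exact Ha); rewrite H; ring. Qed.

Lemma Cminus_eq_0_eq (x y : C) : (x - y)%C = 0%C -> x = y.
Proof. intros H; replace x with ((x - y) + y)%C by ring; rewrite H; ring. Qed.

Lemma RtoC_neq_0 (b : R) : b <> 0 -> RtoC b <> 0%C.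
Proof. intros Hb E; apply Hb; exact (f_equal fst E). Qed.

Lemma sq_mul_le_subcritical ph u kappa eta :
  0 < eta <= 1 / 4 -> eta <= (2 - kappa) / 4 -> 0 <= ph <= kappa + eta -> 0 <= u <= eta ^ 2 / 9 ->
  ph ^ 2 * (1 + u) <= 4 * (1 - eta) ^ 2.
Proof.
  intros Heta Hk Hph Hu.
  assert (ph ^ 2 <= (2 - 3 * eta) ^ 2) by (apply pow_incr; lra).
  assert (ph ^ 2 * u <= 4 * (eta ^ 2 / 9)) by (apply Rmult_le_compat; nra).
  nra.
Qed.

Section ResidueClass.

Variables (k l : nat) (f : nat -> R) (s : R) (r : nat).

Definition class_index (t : nat) : nat := (l + r + t * (k - l))%nat.

Let bb t := band_coef k l (class_index t).
Let hh t : C := (f (class_index t), s).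

Fixpoint class_sol (t : nat) : C :=
  match t with
  | O => 1
  | S O => (- / bb 0 * hh 0)%C
  | S (S t' as t1) => (- / bb t1 * (bb t' * class_sol t' + hh t1 * class_sol t1))%C
  end.

Lemma class_index_S t : class_index (S t) = (class_index t + (k - l))%nat.
Proof. unfold class_index; simpl; lia. Qed.

Let bb_pos t : 0 < bb t.
Proof. apply band_coef_pos; unfold class_index; lia. Qed.

Lemma class_sol_rec0 : (bb 0 * class_sol 1 + hh 0 * class_sol 0 = 0)%C.
Proof.
  pose proof (bb_pos 0); simpl class_sol.
  unfold Cmult, Cplus, RtoC; simpl; apply injective_projections; simpl; field; lra.
Qed.

Lemma class_sol_rec t :
  (bb (S t) * class_sol (S (S t)) + (bb t * class_sol t + hh (S t) * class_sol (S t)) = 0)%C.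
Proof.
  pose proof (bb_pos (S t)).
  change (class_sol (S (S t)))
    with (- / bb (S t) * (bb t * class_sol t + hh (S t) * class_sol (S t)))%C.
  generalize (class_sol t) (class_sol (S t)) (hh (S t)); intros [a1 a2] [c1 c2] [h1 h2].
  unfold Cmult, Cplus, Copp, RtoC; simpl; apply injective_projections; simpl; field; lra.
Qed.

Lemma class_sol_unique (u : nat -> C) :
  (bb 0 * u 1%nat + hh 0 * u 0%nat = 0)%C ->
  (forall t, bb (S t) * u (S (S t)) + (bb t * u t + hh (S t) * u (S t)) = 0)%C ->
  forall t, u t = (u 0%nat * class_sol t)%C.
Proof.
  intros Hu0 Hu.
  enough (H : forall t, u t = (u 0%nat * class_sol t)%C /\ u (S t) = (u 0%nat * class_sol (S t))%C)
    by (intros t; apply H).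
  induction t as [|t [IH0 IH1]].
  - split; [simpl; ring|].
    apply Cminus_eq_0_eq, (Cmult_eq_0_l (bb 0)); [apply RtoC_neq_0, Rgt_not_eq, bb_pos|].
    replace (bb 0 * (u 1%nat - u 0%nat * class_sol 1))%C
      with ((bb 0 * u 1%nat + hh 0 * u 0%nat) - u 0%nat * (bb 0 * class_sol 1 + hh 0 * class_sol 0))%C
      by (change (class_sol 0) with (RtoC 1); ring).
    rewrite Hu0, class_sol_rec0; ring.
  - split; [exact IH1|].
    apply Cminus_eq_0_eq, (Cmult_eq_0_l (bb (S t))); [apply RtoC_neq_0, Rgt_not_eq, bb_pos|].
    replace (bb (S t) * (u (S (S t)) - u 0%nat * class_sol (S (S t))))%C
      with ((bb (S t) * u (S (S t)) + (bb t * u t + hh (S t) * u (S t)))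
            - u 0%nat * (bb (S t) * class_sol (S (S t)) + (bb t * class_sol t + hh (S t) * class_sol (S t))))%C
      by (rewrite IH0, IH1; ring).
    rewrite Hu, class_sol_rec; ring.
Qed.

Hypothesis l_lt_k : (l < k)%nat.
Hypothesis k_plus_l_ge3 : (3 <= k + l)%nat.

Let xx t := INR (class_index (S t)).

Let xx_S t : xx (S t) = xx t + INR (k - l).
Proof. unfold xx; rewrite (class_index_S (S t)), plus_INR; reflexivity. Qed.

Let xx_ge t : INR t + 2 <= xx t - INR l + 1.
Proof.
  unfold xx, class_index; rewrite !plus_INR, mult_INR, S_INR.
  assert (1 <= INR (k - l)) by (apply (le_INR 1); lia).
  pose proof (pos_INR r); pose proof (pos_INR t); nra.
Qed.

Let xx_ge_l t : INR l + 1 <= xx t.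
Proof. pose proof (xx_ge t); pose proof (pos_INR t); lra. Qed.

Let xx_ge_id t : INR t + 1 <= xx t.
Proof. pose proof (xx_ge t); pose proof (pos_INR l); lra. Qed.

Let xx_incr t : xx t <= xx (S t).
Proof. rewrite xx_S; pose proof (pos_INR (k - l)); lra. Qed.

Let bb_S t : bb (S t) = sqrt (band_poly k l (xx t)).
Proof.
  unfold bb, xx; rewrite <- band_coef_sq by (unfold class_index; lia).
  rewrite sqrt_pow2; auto; apply Rlt_le, bb_pos.
Qed.

Let band_poly_xx_ge1 t : 1 <= band_poly k l (xx t).
Proof. apply band_poly_ge1; pose proof (xx_ge_l t); lra. Qed.

Let bb_S_ge1 t : 1 <= bb (S t).
Proof. rewrite bb_S, <- sqrt_1; apply sqrt_le_1_alt, band_poly_xx_ge1. Qed.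

Let class_growth : R := (1 + INR (k - l)) ^ (l + k).

Let class_growth_ge1 : 1 <= class_growth.
Proof. apply pow_R1_Rle; pose proof (pos_INR (k - l)); lra. Qed.

Let bb_step t : bb (S (S t)) <= class_growth * bb (S t).
Proof.
  rewrite !bb_S, xx_S; pose proof class_growth_ge1; pose proof (band_poly_xx_ge1 t).
  pose proof (band_poly_shift_le k l (xx t) (INR (k - l)) ltac:(pose proof (xx_ge_l t); lra) (pos_INR _))
    as Hshift; fold class_growth in Hshift.
  rewrite <- (sqrt_pow2 class_growth), <- sqrt_mult by (try apply pow2_ge_0; lra).
  apply sqrt_le_1_alt.
  assert (class_growth * band_poly k l (xx t) <= class_growth ^ 2 * band_poly k l (xx t))
    by (apply Rmult_le_compat_r; simpl; nra).
  lra.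
Qed.

Let abs_summable_inv_bb : abs_summable (fun t => / bb (S t)).
Proof.
  eapply abs_summable_le; [|exact (abs_summable_abs _ abs_summable_inv_pow_3_2)].
  intros t; pose proof (bb_S_ge1 t); pose proof (pos_INR t).
  assert (Hp : 0 < (INR t + 1) * sqrt (INR t + 1))
    by (apply Rmult_lt_0_compat; [lra | apply sqrt_lt_R0; lra]).
  rewrite !Rabs_right by (apply Rle_ge, Rlt_le, Rinv_0_lt_compat; lra).
  apply Rinv_le_contravar; auto.
  apply band_coef_lower; auto; unfold class_index; nia.
Qed.

Let shift_ratio t := lprod (band_roots k l) (fun c => 1 + INR (k - l) * / (xx t - c)).

Let shift_ratio_ge1 t : 1 <= shift_ratio t.
Proof.
  apply Rle_trans with (lprod (band_roots k l) (fun _ => 1)); [rewrite lprod_const, pow1; lra|].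
  apply lprod_le; intros c Hc; apply band_roots_le in Hc; pose proof (xx_ge_l t); cbv beta.
  assert (0 <= INR (k - l) * / (xx t - c))
    by (apply Rmult_le_pos; [apply pos_INR | apply Rlt_le, Rinv_0_lt_compat; lra]).
  lra.
Qed.

Let bb_SS_div_S t : bb (S (S t)) / bb (S t) = sqrt (shift_ratio t).
Proof.
  rewrite !bb_S, xx_S; pose proof (xx_ge_l t); pose proof (band_poly_xx_ge1 t).
  pose proof (shift_ratio_ge1 t).
  rewrite (band_poly_shift_ratio k l (xx t) (INR (k - l))) by lra.
  change (lprod (band_roots k l) (fun c => 1 + INR (k - l) / (xx t - c))) with (shift_ratio t).
  rewrite sqrt_mult by lra.
  field; apply Rgt_not_eq, sqrt_lt_R0; lra.
Qed.

Let abs_summable_bb_ratio :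
  abs_summable (fun t => bb (S (S t)) ^ 2 / (bb (S t) * bb (S (S (S t)))) - 1).
Proof.
  assert (Hbv : bv (fun t => sqrt (shift_ratio t))).
  { apply bv_sqrt with (c := 1); [lra | apply shift_ratio_ge1|].
    apply bv_lprod; intros c Hc; apply band_roots_le in Hc.
    apply bv_plus; [apply bv_const | apply bv_scal].
    apply bv_inv_sub; [apply xx_incr | intros t; pose proof (xx_ge_l t); lra]. }
  eapply abs_summable_le; [|exact (abs_summable_abs _ Hbv)].
  intros t; cbv beta.
  pose proof (bb_S_ge1 t); pose proof (bb_S_ge1 (S t)); pose proof (bb_S_ge1 (S (S t))).
  assert (Hq : 1 <= sqrt (shift_ratio (S t)))
    by (rewrite <- sqrt_1; apply sqrt_le_1_alt, shift_ratio_ge1).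
  replace (bb (S (S t)) ^ 2 / (bb (S t) * bb (S (S (S t)))) - 1)
    with ((sqrt (shift_ratio t) - sqrt (shift_ratio (S t))) * / sqrt (shift_ratio (S t)))
    by (rewrite <- !bb_SS_div_S; field; lra).
  rewrite Rabs_mult, (Rabs_right (/ _)) by (apply Rle_ge, Rlt_le, Rinv_0_lt_compat; lra).
  rewrite <- Rabs_Ropp, Ropp_minus_distr.
  rewrite <- (Rmult_1_r (Rabs (sqrt (shift_ratio (S t)) - sqrt (shift_ratio t)))) at 2.
  apply Rmult_le_compat_l; [apply Rabs_pos|].
  rewrite <- Rinv_1; apply Rinv_le_contravar; lra.
Qed.

Let normalized_poly t := lprod (band_roots k l) (fun c => 1 - c / xx t).
Let normalized_poly_lb := (/ (INR l + 1)) ^ (l + k).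

Let normalized_poly_lb_pos : 0 < normalized_poly_lb.
Proof. apply pow_lt, Rinv_0_lt_compat; pose proof (pos_INR l); lra. Qed.

Let normalized_poly_lower t : normalized_poly_lb <= normalized_poly t.
Proof. apply normalized_band_poly_lower, xx_ge_l. Qed.

Let bv_normalized_poly : bv normalized_poly.
Proof.
  apply bv_lprod; intros c _.
  assert (Hinv : bv (fun t => / (xx t - 0))).
  { apply bv_inv_sub; [apply xx_incr|]; intros t; pose proof (xx_ge_id t); pose proof (pos_INR t); lra. }
  apply bv_plus; [apply bv_const|].
  eapply abs_summable_le_abs; [|exact (bv_scal (- c) _ Hinv)].
  intros t; right; f_equal; unfold Rdiv; rewrite !Rminus_0_r; ring.
Qed.

Let scaled_f t := f (class_index (S t)) * Rpower (xx t) (- INR (k + l) / 2).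

Let f_div_bb_eq t : f (class_index (S t)) / bb (S t) = scaled_f t * / sqrt (normalized_poly t).
Proof.
  pose proof (xx_ge_id t); pose proof (pos_INR t); pose proof (band_poly_xx_ge1 t).
  pose proof (Rpower_pos (xx t) (- INR (k + l) / 2)).
  assert (Hnorm : Rpower (xx t) (- INR (k + l) / 2) ^ 2 * band_poly k l (xx t) = normalized_poly t).
  { rewrite Rpower_neg_half_sq, band_poly_factor, Nat.add_comm by lra.
    unfold normalized_poly; field; apply pow_nonzero; lra. }
  rewrite <- Hnorm, sqrt_mult, sqrt_pow2, bb_S by (try apply pow2_ge_0; lra).
  assert (0 < sqrt (band_poly k l (xx t))) by (apply sqrt_lt_R0; lra).
  unfold scaled_f; field; lra.
Qed.

Let bv_f_div_bb (lam : nat -> R) :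
  asymp_expansion (fun n => f n * Rpower (INR n) (- INR (k + l) / 2)) lam ->
  bv (fun t => f (class_index t) / bb t).
Proof.
  intros Has.
  assert (Hbv : bv (fun t => scaled_f t * / sqrt (normalized_poly t))).
  { apply bv_mult.
    - destruct (Has 2%nat) as [C [N HN]].
      apply (bv_of_asymp xx xx_ge_id xx_incr scaled_f lam C N).
      intros t Ht; apply (HN (class_index (S t))); unfold class_index; nia.
    - apply bv_inv with (c := sqrt normalized_poly_lb).
      + apply sqrt_lt_R0, normalized_poly_lb_pos.
      + intros t; apply sqrt_le_1_alt, normalized_poly_lower.
      + apply bv_sqrt with (c := normalized_poly_lb);
          [apply normalized_poly_lb_pos | apply normalized_poly_lower | apply bv_normalized_poly]. }
  apply abs_summable_of_S; eapply abs_summable_le_abs; [|exact Hbv].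
  intros t; cbv beta; rewrite !f_div_bb_eq; lra.
Qed.

Let bb_prod_lower t : (xx t - INR l + 1) ^ (l + k) <= bb (S t) * bb (S (S t)).
Proof.
  pose proof (xx_ge_l t); pose proof (bb_S_ge1 t); pose proof (band_poly_xx_ge1 t).
  assert (Hmono : bb (S t) <= bb (S (S t))).
  { rewrite !bb_S, xx_S; apply sqrt_le_1_alt, band_poly_mono; [lra | apply pos_INR]. }
  assert (Hsq : bb (S t) * bb (S t) = band_poly k l (xx t)) by (rewrite bb_S; apply sqrt_sqrt; lra).
  pose proof (band_poly_ge_pow k l (xx t) ltac:(lra)).
  assert (bb (S t) * bb (S t) <= bb (S t) * bb (S (S t))) by (apply Rmult_le_compat_l; lra).
  lra.
Qed.

Let xx_S_pow_le t (A D : R) :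
  A = INR (k - l) + INR l - 1 -> D = 2 ^ (l + k) - 1 -> 0 <= A <= xx t - INR l + 1 ->
  xx (S t) ^ (l + k) <= (xx t - INR l + 1) ^ (l + k) * (1 + A / (xx t - INR l + 1) * D).
Proof.
  intros -> -> HA.
  assert (Hy : 0 < xx t - INR l + 1) by (pose proof (xx_ge t); pose proof (pos_INR t); lra).
  replace (xx (S t))
    with ((xx t - INR l + 1) * (1 + (INR (k - l) + INR l - 1) / (xx t - INR l + 1)))
    by (rewrite xx_S; field; apply Rgt_not_eq; lra).
  rewrite Rpow_mult_distr; apply Rmult_le_compat_l; [apply pow_le; lra|].
  apply pow_1_plus_le_chord; split; [apply Rdiv_le_0_compat; lra|].
  apply (Rmult_le_reg_r (xx t - INR l + 1)); [lra|].
  unfold Rdiv; rewrite Rmult_assoc, Rinv_l by (apply Rgt_not_eq; lra); lra.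
Qed.

Let scaled_f_sq t : f (class_index (S t)) ^ 2 = scaled_f t ^ 2 * xx t ^ (l + k).
Proof.
  pose proof (xx_ge_id t); pose proof (pos_INR t).
  unfold scaled_f; rewrite Rpow_mult_distr, Rpower_neg_half_sq, (Nat.add_comm k l) by lra.
  field; apply pow_nonzero; lra.
Qed.

(* [f n ~ kappa n^((k+l)/2)] with [kappa < 2], while [bb t * bb (S t) ~ n^(k+l)]. *)
Let f_subcritical (lam : nat -> R) (kappa : R) :
  (forall n, 0 <= f n) ->
  asymp_expansion (fun n => f n * Rpower (INR n) (- INR (k + l) / 2)) lam ->
  lam 0%nat = kappa -> kappa < 2 ->
  exists T0 eta, 0 < eta < 1 /\ forall t, (T0 <= t)%nat ->
    f (class_index (S (S t))) ^ 2 <= 4 * (1 - eta) ^ 2 * bb (S t) * bb (S (S t)).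
Proof.
  intros Hf Has Hk0 Hk2.
  set (eta := Rmin ((2 - kappa) / 4) (1 / 4)).
  assert (Heta : 0 < eta <= 1 / 4 /\ eta <= (2 - kappa) / 4).
  { unfold eta; repeat split; [apply Rmin_glb_lt; lra | apply Rmin_r | apply Rmin_l]. }
  set (A := INR (k - l) + INR l - 1); set (D := 2 ^ (l + k) - 1).
  assert (HA : 0 <= A)
    by (unfold A; pose proof (le_INR 1 (k - l) ltac:(lia)); pose proof (pos_INR l); simpl in *; lra).
  assert (HD : 0 <= D) by (unfold D; pose proof (pow_R1_Rle 2 (l + k) ltac:(lra)); lra).
  destruct (asymp_expansion_leading_le _ _ eta Has ltac:(lra)) as [N0 HN0].
  destruct (INR_archimed 1 (Rmax A (9 * D * A / eta ^ 2))) as [N1 HN1]; [lra|].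
  pose proof (Rmax_l A (9 * D * A / eta ^ 2)); pose proof (Rmax_r A (9 * D * A / eta ^ 2)).
  exists (max N0 N1), eta; split; [lra|]; intros t Ht.
  set (y := xx t - INR l + 1).
  assert (Hy : INR N1 + 2 <= y) by (pose proof (xx_ge t); pose proof (le_INR N1 t ltac:(lia)); unfold y; lra).
  assert (Hph : 0 <= scaled_f (S t) <= kappa + eta).
  { split; [apply Rmult_le_pos; [apply Hf | apply Rlt_le, Rpower_pos]|].
    rewrite <- Hk0; apply HN0; unfold class_index; nia. }
  assert (Hsmall : 0 <= A / y * D <= eta ^ 2 / 9).
  { split; [apply Rmult_le_pos; [apply Rdiv_le_0_compat|]; lra|].
    apply (Rmult_le_reg_r (9 * y / eta ^ 2)); [apply Rdiv_lt_0_compat; [lra | apply pow_lt; lra]|].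
    replace (A / y * D * (9 * y / eta ^ 2)) with (9 * D * A / eta ^ 2) by (field; split; lra).
    replace (eta ^ 2 / 9 * (9 * y / eta ^ 2)) with y by (field; lra); lra. }
  pose proof (xx_S_pow_le t A D eq_refl eq_refl ltac:(fold y; lra)) as Hpow; fold y in Hpow.
  pose proof (sq_mul_le_subcritical _ _ _ _ (proj1 Heta) (proj2 Heta) Hph Hsmall) as Hcoef.
  pose proof (bb_prod_lower t) as Hbb; fold y in Hbb.
  assert (Hypow : 0 <= y ^ (l + k)) by (apply pow_le; lra).
  rewrite scaled_f_sq.
  apply Rle_trans with (scaled_f (S t) ^ 2 * (1 + A / y * D) * y ^ (l + k)).
  - rewrite (Rmult_assoc (scaled_f (S t) ^ 2)), (Rmult_comm _ (y ^ (l + k))).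
    apply Rmult_le_compat_l; [apply pow2_ge_0 | exact Hpow].
  - apply Rle_trans with (4 * (1 - eta) ^ 2 * y ^ (l + k)); [apply Rmult_le_compat_r; auto|].
    rewrite (Rmult_assoc _ (bb (S t))).
    apply Rmult_le_compat_l; [apply Rmult_le_pos; [lra | apply pow2_ge_0] | exact Hbb].
Qed.

Lemma class_sol_bound (lam : nat -> R) (kappa : R) :
  (forall n, 0 <= f n) ->
  asymp_expansion (fun n => f n * Rpower (INR n) (- INR (k + l) / 2)) lam ->
  lam 0%nat = kappa -> kappa < 2 ->
  exists K T, forall t, (T <= t)%nat -> Cmod (class_sol (S (S t))) ^ 2 <= K / bb (S t).
Proof.
  intros Hf Has Hk0 Hk2.
  destruct (f_subcritical lam kappa Hf Has Hk0 Hk2) as [T0 [eta [Heta HT0]]].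
  destruct (energy_bound (fun t => bb (S t)) (fun t => f (class_index (S t))) (fun t => fst (class_sol (S t)))
              (fun t => snd (class_sol (S t))) s class_growth eta T0) as [K HK].
  - intros t; pose proof (f_equal fst (class_sol_rec (S t))) as E.
    unfold hh, Cmult, Cplus, RtoC in E; cbn [fst snd] in E; lra.
  - intros t; pose proof (f_equal snd (class_sol_rec (S t))) as E.
    unfold hh, Cmult, Cplus, RtoC in E; cbn [fst snd] in E; lra.
  - apply bb_S_ge1.
  - apply class_growth_ge1.
  - apply bb_step.
  - apply abs_summable_bb_ratio.
  - apply abs_summable_inv_bb.
  - apply (abs_summable_S (fun t => f (class_index (S t)) / bb (S t) - f (class_index t) / bb t)),
      (bv_f_div_bb lam Has).
  - exact Heta.
  - exact HT0.
  - exists K, T0; intros t Ht; rewrite Cmod2_alt; apply (HK t Ht).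
Qed.

End ResidueClass.

(** * The band matrix of A + i s and its transpose *)

Lemma csum_0 (g : nat -> C) : csum 0 g = 0%C.
Proof. reflexivity. Qed.

Lemma csum_S d (g : nat -> C) : csum (S d) g = (csum d g + g d)%C.
Proof.
  unfold csum; rewrite seq_S, map_app, fold_right_app; simpl.
  induction (map g (seq 0 d)) as [|a L IH]; simpl; [ring|].
  rewrite IH; ring.
Qed.

Lemma csum_ext_lt d (g h : nat -> C) : (forall j, (j < d)%nat -> g j = h j) -> csum d g = csum d h.
Proof.
  induction d as [|d IH]; intros H; [reflexivity|].
  rewrite !csum_S, IH, H by (try (intros; apply H); lia); reflexivity.
Qed.

Lemma csum_plus d (g h : nat -> C) : csum d (fun j => (g j + h j)%C) = (csum d g + csum d h)%C.
Proof. induction d as [|d IH]; [rewrite !csum_0; ring|]. rewrite !csum_S, IH; ring. Qed.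

Lemma csum_scal d c (g : nat -> C) : csum d (fun j => (c * g j)%C) = (c * csum d g)%C.
Proof. induction d as [|d IH]; [rewrite !csum_0; ring|]. rewrite !csum_S, IH; ring. Qed.

Lemma csum_zero d (g : nat -> C) : (forall j, (j < d)%nat -> g j = 0%C) -> csum d g = 0%C.
Proof.
  induction d as [|d IH]; intros H; [reflexivity|].
  rewrite csum_S, IH, H by (try (intros; apply H); lia); ring.
Qed.

Lemma csum_single d (g : nat -> C) j0 : (j0 < d)%nat ->
  (forall j, (j < d)%nat -> j <> j0 -> g j = 0%C) -> csum d g = g j0.
Proof.
  induction d as [|d IH]; intros Hj H; [lia|].
  rewrite csum_S; destruct (Nat.eq_dec j0 d) as [->|Hne].
  - rewrite csum_zero; [ring|]; intros; apply H; lia.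
  - rewrite IH, (H d) by (try (intros; apply H); lia); ring.
Qed.

Definition unit_vec (j : nat) : vec := fun n => if (n =? j)%nat then 1%C else 0%C.

Lemma csum_unit_vec d j c : (j < d)%nat -> csum d (fun n => (unit_vec j n * c)%C) = c.
Proof.
  intros Hj; rewrite (csum_single _ (fun n => (unit_vec j n * c)%C) j Hj); unfold unit_vec.
  - rewrite Nat.eqb_refl; ring.
  - intros n _ Hn; apply Nat.eqb_neq in Hn; rewrite Hn; ring.
Qed.

Lemma csum_stable (a : nat -> C) N n :
  (forall n, (N <= n)%nat -> a n = 0%C) -> (N <= n)%nat -> csum n a = csum N a.
Proof. intros H Hn; induction Hn as [|n Hn IH]; auto. rewrite csum_S, IH, H by lia; ring. Qed.

Lemma is_series_csum (a : nat -> C) N :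
  (forall n, (N <= n)%nat -> a n = 0%C) -> is_series a (csum N a).
Proof.
  intros H; apply filterlim_ext_loc with (f := fun _ => csum N a); [|apply filterlim_const].
  exists N; intros n Hn.
  assert (Hsum : forall n, sum_n a n = csum (S n) a).
  { intros m; induction m as [|m IH].
    - rewrite sum_O, csum_S, csum_0, Cplus_0_l; reflexivity.
    - rewrite sum_Sn, IH, (csum_S (S m)); reflexivity. }
  rewrite Hsum; symmetry; apply csum_stable; auto.
Qed.

Section Operator.

Variables (k l : nat) (theta : R) (f : nat -> R) (s : R).
Hypothesis l_lt_k : (l < k)%nat.

Definition diag_entry (n : nat) : C := (f n, s).

Definition lower_coef (n : nat) : R := if (k - l <=? n)%nat then band_coef k l (n - (k - l)) else 0.

Definition shifted_opA (phi : vec) : vec := vadd (opA k l theta f phi) (vscal (RtoC s * Ci)%C phi).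

Definition transposed_row (w : nat -> C) (j : nat) : C :=
  (xi theta * band_coef k l j * w (j + (k - l))%nat
   + (if (k - l <=? j)%nat then Cconj (xi theta) * band_coef k l (j - (k - l)) * w (j - (k - l))%nat
      else 0)
   + diag_entry j * w j)%C.

Lemma transposed_row_ext (w1 w2 : nat -> C) j :
  (forall n, w1 n = w2 n) -> transposed_row w1 j = transposed_row w2 j.
Proof. intros H; unfold transposed_row; rewrite !H; reflexivity. Qed.

Lemma shifted_opA_apply (phi : vec) n : shifted_opA phi n =
  (xi theta * lower_coef n * phi (n - (k - l))%nat
   + Cconj (xi theta) * band_coef k l n * phi (n + (k - l))%nat + diag_entry n * phi n)%C.
Proof.
  unfold shifted_opA, opA, vadd, vscal, op_fN, diag_entry, lower_coef.
  rewrite mono_kl_apply, mono_lk_apply by lia.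
  destruct (k - l <=? n)%nat; unfold RtoC, Ci; ceq.
Qed.

Lemma unit_vec_sub_shift j n :
  (lower_coef n * unit_vec j (n - (k - l))%nat)%C
  = (unit_vec (j + (k - l))%nat n * band_coef k l j)%C.
Proof.
  unfold unit_vec, lower_coef; destruct (Nat.leb_spec (k - l) n);
    destruct (Nat.eqb_spec (n - (k - l)) j); destruct (Nat.eqb_spec n (j + (k - l))); try lia;
    subst; ceq.
Qed.

Lemma unit_vec_add_shift j n :
  unit_vec j (n + (k - l))%nat = if (k - l <=? j)%nat then unit_vec (j - (k - l))%nat n else 0%C.
Proof.
  unfold unit_vec; destruct (Nat.leb_spec (k - l) j);
    destruct (Nat.eqb_spec (n + (k - l)) j); try destruct (Nat.eqb_spec n (j - (k - l)));
    auto; lia.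
Qed.

Lemma shifted_opA_unit_vec w j n :
  (w n * shifted_opA (unit_vec j) n)%C =
  (unit_vec (j + (k - l))%nat n * (xi theta * band_coef k l j * w (j + (k - l))%nat)
   + (if (k - l <=? j)%nat
      then unit_vec (j - (k - l))%nat n * (Cconj (xi theta) * band_coef k l (j - (k - l)) * w (j - (k - l))%nat)
      else 0)
   + unit_vec j n * (diag_entry j * w j))%C.
Proof.
  rewrite shifted_opA_apply, <- (Cmult_assoc (xi theta)), unit_vec_sub_shift, unit_vec_add_shift.
  destruct (Nat.leb_spec (k - l) j); unfold unit_vec;
    repeat match goal with |- context [Nat.eqb ?a ?b] => destruct (Nat.eqb_spec a b) end;
    try lia; subst; ring.
Qed.

Lemma csum_shifted_opA_unit_vec w j M : (j + (k - l) < M)%nat ->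
  csum M (fun n => w n * shifted_opA (unit_vec j) n)%C = transposed_row w j.
Proof.
  intros HM; rewrite (csum_ext_lt _ _ _ (fun n _ => shifted_opA_unit_vec w j n)).
  rewrite !csum_plus, !csum_unit_vec by lia; unfold transposed_row.
  destruct (Nat.leb_spec (k - l) j).
  - rewrite csum_unit_vec by lia; reflexivity.
  - rewrite csum_zero by auto; reflexivity.
Qed.

Lemma shifted_opA_ext (phi psi : vec) n : (forall x, phi x = psi x) -> shifted_opA phi n = shifted_opA psi n.
Proof. intros H; rewrite !shifted_opA_apply, !H; reflexivity. Qed.

Lemma shifted_opA_support (phi : vec) N n : (forall x, (N <= x)%nat -> phi x = 0%C) ->
  (N + (k - l) <= n)%nat -> shifted_opA phi n = 0%C.
Proof. intros H Hn; rewrite shifted_opA_apply, !H by lia; ring. Qed.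

Lemma csum_shifted_opA (w : nat -> C) N : forall phi : vec,
  (forall n, (N <= n)%nat -> phi n = 0%C) -> forall M, (N + (k - l) <= M)%nat ->
  csum M (fun n => (w n * shifted_opA phi n)%C) = csum N (fun j => (phi j * transposed_row w j)%C).
Proof.
  induction N as [|N IH]; intros phi Hphi M HM.
  - apply csum_zero; intros n _; rewrite shifted_opA_apply, !Hphi by lia; ring.
  - set (phi' := (fun x => if (x =? N)%nat then RtoC 0 else phi x) : vec).
    assert (Hsplit : forall n, shifted_opA phi n = (shifted_opA phi' n + phi N * shifted_opA (unit_vec N) n)%C).
    { assert (Hdec : forall x, phi x = (phi' x + phi N * unit_vec N x)%C)
        by (intros x; unfold phi', unit_vec; destruct (Nat.eqb_spec x N); subst; ring).
      intros n; rewrite (shifted_opA_ext _ _ n Hdec), !shifted_opA_apply; ring. }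
    rewrite (csum_ext_lt _ _ (fun n => (w n * shifted_opA phi' n + phi N * (w n * shifted_opA (unit_vec N) n))%C))
      by (intros n _; rewrite Hsplit; ring).
    rewrite csum_plus, csum_scal, csum_shifted_opA_unit_vec, IH by
      (try (intros n Hn; unfold phi'; destruct (Nat.eqb_spec n N); auto; apply Hphi); lia).
    rewrite csum_S; f_equal.
    apply csum_ext_lt; intros j Hj; unfold phi'; destruct (Nat.eqb_spec j N); [lia | reflexivity].
Qed.

Lemma orth_shifted_opA_iff (psi : vec) :
  (forall phi, in_D0 phi -> orth psi (shifted_opA phi)) <->
  (forall j, transposed_row (fun n => Cconj (psi n)) j = 0%C).
Proof.
  set (w n := Cconj (psi n)); split.
  - intros Horth j.
    assert (HD : in_D0 (unit_vec j)).
    { exists (S j); intros n Hn; unfold unit_vec; destruct (Nat.eqb_spec n j); [lia | reflexivity]. }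
    assert (Hfin : is_series (fun n => (w n * shifted_opA (unit_vec j) n)%C)
                     (csum (S (j + (k - l))) (fun n => (w n * shifted_opA (unit_vec j) n)%C))).
    { apply is_series_csum; intros n Hn.
      rewrite (shifted_opA_support (unit_vec j) (S j)); [ring| |lia].
      intros x Hx; unfold unit_vec; destruct (Nat.eqb_spec x j); [lia | reflexivity]. }
    rewrite <- (csum_shifted_opA_unit_vec w j (S (j + (k - l)))) by lia.
    exact (filterlim_locally_unique _ _ _ Hfin (Horth _ HD)).
  - intros Hrow phi [N HN]; unfold orth; fold w.
    replace (RtoC 0) with (csum (N + (k - l)) (fun n => (w n * shifted_opA phi n)%C)).
    + apply is_series_csum; intros n Hn; rewrite (shifted_opA_support phi N) by auto; ring.
    + rewrite (csum_shifted_opA w N phi HN) by lia.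
      apply csum_zero; intros j _; rewrite Hrow; ring.
Qed.

End Operator.

(** * The deficiency spaces *)

Lemma xi_mul_conj theta : (xi theta * Cconj (xi theta))%C = 1%C.
Proof.
  unfold xi, Cconj, Cmult, RtoC; simpl; pose proof (sin2_cos2 theta); unfold Rsqr in *.
  apply injective_projections; simpl; lra.
Qed.

Lemma xi_pow_mul_conj_pow theta t : (xi theta ^ t * Cconj (xi theta) ^ t)%C = 1%C.
Proof. now rewrite <- Cpow_mult_l, xi_mul_conj, Cpow_1_l. Qed.

Lemma Cmod_xi theta : Cmod (xi theta) = 1.
Proof.
  unfold Cmod, xi; simpl; rewrite !Rmult_1_r, Rplus_comm.
  pose proof (sin2_cos2 theta); unfold Rsqr in *; rewrite H; apply sqrt_1.
Qed.

Lemma row_rescale_unimodular (X Z P b b' h w0 w1 w2 : C) : (X * Z)%C = 1%C ->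
  ((X * P) * (X * b * w2 + Z * b' * w0 + h * w1)
   = b * (X * (X * P) * w2) + (b' * (P * w0) + h * (X * P * w1)))%C.
Proof.
  intros H; transitivity (b * (X * (X * P) * w2) + ((X * Z) * b' * (P * w0) + h * (X * P * w1)))%C;
    [ring | rewrite H; ring].
Qed.

Section DefectBasis.

Variables (k l : nat) (theta : R) (f : nat -> R) (s : R).
Hypothesis l_lt_k : (l < k)%nat.

Let cidx r t := class_index k l r t.
Let row := transposed_row k l theta f s.

Lemma class_index_div_mod r t : (r < k - l)%nat ->
  ((cidx r t - l) mod (k - l) = r /\ (cidx r t - l) / (k - l) = t)%nat.
Proof.
  intros Hr; unfold cidx, class_index.
  replace (l + r + t * (k - l) - l)%nat with (r + t * (k - l))%nat by nia.
  split; [rewrite Nat.Div0.mod_add; apply Nat.mod_small; auto|].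
  rewrite Nat.div_add, Nat.div_small by lia; lia.
Qed.

Lemma class_index_decomp n : (l <= n)%nat -> n = cidx ((n - l) mod (k - l)) ((n - l) / (k - l)).
Proof. intros H; unfold cidx, class_index; pose proof (Nat.div_mod_eq (n - l) (k - l)); lia. Qed.

Lemma residue_add_shift n : (l <= n)%nat -> ((n + (k - l) - l) mod (k - l) = (n - l) mod (k - l))%nat.
Proof.
  intros H; replace (n + (k - l) - l)%nat with (n - l + 1 * (k - l))%nat by lia.
  apply Nat.Div0.mod_add.
Qed.

(* The solution of the transposed recurrence supported on the class of r, equal to 1 at l + r. *)
Definition class_vec (r n : nat) : C :=
  if andb (l <=? n)%nat ((n - l) mod (k - l) =? r)%nat
  then (Cconj (xi theta) ^ ((n - l) / (k - l)) * class_sol k l f s r ((n - l) / (k - l)))%C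
  else RtoC 0.

Lemma class_vec_index r t : (r < k - l)%nat ->
  class_vec r (cidx r t) = (Cconj (xi theta) ^ t * class_sol k l f s r t)%C.
Proof.
  intros Hr; unfold class_vec; destruct (class_index_div_mod r t Hr) as [-> ->].
  replace (l <=? cidx r t)%nat with true by (symmetry; apply Nat.leb_le; unfold cidx, class_index; lia).
  now rewrite Nat.eqb_refl.
Qed.

Lemma class_vec_lt r n : (n < l)%nat -> class_vec r n = 0%C.
Proof.
  intros H; unfold class_vec.
  replace (l <=? n)%nat with false by (symmetry; apply Nat.leb_gt; auto); reflexivity.
Qed.

Lemma class_vec_residue r n : ((n - l) mod (k - l) <> r)%nat -> class_vec r n = 0%C.
Proof.
  intros H; unfold class_vec; apply Nat.eqb_neq in H; rewrite H, Bool.andb_false_r; reflexivity.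
Qed.

Lemma transposed_row_class0 (w : nat -> C) r : (r < k - l)%nat ->
  row w (cidx r 0) = (band_coef k l (cidx r 0) * (xi theta ^ 1 * w (cidx r 1))
                    + (f (cidx r 0), s) * (xi theta ^ 0 * w (cidx r 0)))%C.
Proof.
  intros Hr; unfold row, transposed_row, diag_entry.
  replace (cidx r 0 + (k - l))%nat with (cidx r 1) by (unfold cidx; rewrite class_index_S; reflexivity).
  destruct (Nat.leb_spec (k - l) (cidx r 0)).
  - rewrite (band_coef_lt k l (cidx r 0 - (k - l))) by (unfold cidx, class_index in *; lia); simpl; ring.
  - simpl; ring.
Qed.

Lemma transposed_row_class (w : nat -> C) r t :
  (xi theta ^ S t * row w (cidx r (S t)))%C =
  (band_coef k l (cidx r (S t)) * (xi theta ^ S (S t) * w (cidx r (S (S t))))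
   + (band_coef k l (cidx r t) * (xi theta ^ t * w (cidx r t))
      + (f (cidx r (S t)), s) * (xi theta ^ S t * w (cidx r (S t)))))%C.
Proof.
  unfold row, transposed_row, diag_entry.
  unfold cidx; rewrite (class_index_S k l r (S t)), (class_index_S k l r t).
  replace (k - l <=? class_index k l r t + (k - l))%nat with true by (symmetry; apply Nat.leb_le; lia).
  rewrite Nat.add_sub.
  rewrite !Cpow_S; apply row_rescale_unimodular, xi_mul_conj.
Qed.

Lemma xi_neq_0 : xi theta <> 0%C.
Proof. apply Cmod_gt_0; rewrite Cmod_xi; lra. Qed.

Lemma xi_pow_class_vec r t : (r < k - l)%nat ->
  (xi theta ^ t * class_vec r (cidx r t))%C = class_sol k l f s r t.
Proof.
  intros Hr; rewrite class_vec_index, Cmult_assoc, xi_pow_mul_conj_pow by auto; ring.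
Qed.

Lemma transposed_row_class_vec r j : (r < k - l)%nat -> row (class_vec r) j = 0%C.
Proof.
  intros Hr; destruct (le_lt_dec l j) as [Hlj|Hlj].
  - destruct (Nat.eq_dec ((j - l) mod (k - l)) r) as [Hres|Hres].
    + pose proof (class_index_decomp j Hlj) as Hj; rewrite Hres in Hj.
      set (t := ((j - l) / (k - l))%nat) in Hj; clearbody t; subst j.
      destruct t as [|t].
      * rewrite transposed_row_class0, !xi_pow_class_vec by auto; apply class_sol_rec0.
      * apply (Cmult_eq_0_l (xi theta ^ S t)); [apply Cpow_nz, xi_neq_0|].
        rewrite transposed_row_class, !xi_pow_class_vec by auto; apply class_sol_rec.
    + unfold row, transposed_row.
      rewrite (class_vec_residue r j), (class_vec_residue r (j + (k - l))) by (rewrite ?residue_add_shift; auto).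
      destruct (Nat.leb_spec (k - l) j); [|ring].
      destruct (le_lt_dec l (j - (k - l))).
      * rewrite class_vec_residue; [ring|].
        rewrite <- (residue_add_shift (j - (k - l))), Nat.sub_add by lia; auto.
      * rewrite class_vec_lt by auto; ring.
  - unfold row, transposed_row; rewrite (band_coef_lt k l j), (class_vec_lt r j) by auto.
    destruct (Nat.leb_spec (k - l) j); [rewrite band_coef_lt by lia|]; ring.
Qed.

Lemma class_determined (w : nat -> C) r : (r < k - l)%nat -> (forall j, row w j = 0%C) ->
  forall t, w (cidx r t) = (w (cidx r 0) * class_vec r (cidx r t))%C.
Proof.
  intros Hr Hrow t.
  set (u t := (xi theta ^ t * w (cidx r t))%C).
  assert (Hu : forall t, u t = (u 0%nat * class_sol k l f s r t)%C).
  { apply class_sol_unique.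
    - rewrite <- (Hrow (cidx r 0)), transposed_row_class0 by auto; reflexivity.
    - intros t'; rewrite <- (Cmult_0_r (xi theta ^ S t')), <- (Hrow (cidx r (S t'))).
      rewrite transposed_row_class; reflexivity. }
  rewrite class_vec_index by auto.
  transitivity (Cconj (xi theta) ^ t * u t)%C.
  - unfold u; rewrite Cmult_assoc, (Cmult_comm (Cconj (xi theta) ^ t)), xi_pow_mul_conj_pow; ring.
  - rewrite Hu; unfold u; simpl; ring.
Qed.


Lemma class_vec_independent (c : nat -> C) :
  (forall n, csum (k - l) (fun j => (c j * Cconj (class_vec j n))%C) = 0%C) ->
  forall j, (j < k - l)%nat -> c j = 0%C.
Proof.
  intros Hc j Hj; specialize (Hc (l + j)%nat).
  rewrite (csum_single _ _ j Hj) in Hc.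
  - replace (l + j)%nat with (cidx j 0) in Hc by (unfold cidx, class_index; lia).
    rewrite class_vec_index in Hc by auto; simpl in Hc.
    rewrite <- Hc; unfold Cconj, RtoC; ceq.
  - intros r Hr Hrj; rewrite class_vec_residue; [unfold Cconj, RtoC; ceq|].
    rewrite Nat.add_comm, Nat.add_sub, Nat.mod_small; auto.
Qed.

Lemma defect_space_spanned (psi : vec) : s <> 0 -> defect_space (opA k l theta f) s psi ->
  exists c : nat -> C, forall n, psi n = csum (k - l) (fun j => (c j * Cconj (class_vec j n))%C).
Proof.
  intros Hs [_ Hdef].
  pose proof (proj1 (orth_shifted_opA_iff k l theta f s l_lt_k psi) Hdef) as Horth.
  exists (fun r => psi (l + r)%nat); intros n.
  destruct (le_lt_dec l n) as [Hln|Hln].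
  - set (r0 := ((n - l) mod (k - l))%nat).
    assert (Hr0 : (r0 < k - l)%nat) by (apply Nat.mod_upper_bound; lia).
    rewrite (csum_single _ _ r0 Hr0)
      by (intros r Hr Hne; rewrite class_vec_residue by auto; unfold Cconj, RtoC; ceq).
    pose proof (class_index_decomp n Hln) as Hn; fold r0 in Hn.
    set (t := ((n - l) / (k - l))%nat) in Hn; clearbody t; rewrite Hn.
    pose proof (f_equal Cconj (class_determined (fun n => Cconj (psi n)) r0 Hr0 Horth t)) as Hdet.
    rewrite Cconj_conj, Cmult_conj, Cconj_conj in Hdet.
    rewrite Hdet; unfold cidx, class_index; rewrite Nat.mul_0_l, Nat.add_0_r; reflexivity.
  - rewrite csum_zero by (intros r _; rewrite class_vec_lt by auto; unfold Cconj, RtoC; ceq).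
    pose proof (Horth n) as Hrow; unfold transposed_row in Hrow.
    rewrite band_coef_lt in Hrow by auto.
    replace (if (k - l <=? n)%nat then _ else _) with (RtoC 0) in Hrow
      by (destruct (Nat.leb_spec (k - l) n); [rewrite band_coef_lt by lia|]; ring).
    assert (Hdiag : (diag_entry f s n * Cconj (psi n))%C = 0%C) by (rewrite <- Hrow; ring).
    apply Cmult_eq_0_l in Hdiag; [|intros E; apply Hs; exact (f_equal snd E)].
    rewrite <- (Cconj_conj (psi n)), Hdiag; unfold Cconj, RtoC; ceq.
Qed.

Section Dimension.

Variables (lam : nat -> R) (kappa : R).
Hypothesis k_plus_l_ge3 : (3 <= k + l)%nat.
Hypothesis f_nonneg : forall n, 0 <= f n.
Hypothesis f_asymp : asymp_expansion (fun n => f n * Rpower (INR n) (- INR (k + l) / 2)) lam.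
Hypothesis lam0 : lam 0%nat = kappa.
Hypothesis kappa_lt2 : kappa < 2.

Lemma class_vec_l2 r : (r < k - l)%nat -> in_l2 (fun n => Cconj (class_vec r n)).
Proof.
  intros Hr.
  destruct (class_sol_bound k l f s r l_lt_k k_plus_l_ge3 lam kappa f_nonneg f_asymp lam0 kappa_lt2)
    as [K [T0 HK]].
  apply abs_summable_ex_series; [intros; apply pow2_ge_0|].
  apply abs_summable_eventually_le with (T0 := cidx r (T0 + 2))
    (c := fun n => Rabs K * / band_coef k l (n - (k - l))).
  - intros n Hn.
    assert (Hb : 0 < band_coef k l (n - (k - l)))
      by (apply band_coef_pos; unfold cidx, class_index in Hn; nia).
    rewrite Rabs_right, Cmod_conj by apply Rle_ge, pow2_ge_0.
    destruct (Nat.eq_dec ((n - l) mod (k - l)) r) as [Hres|Hres].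
    + pose proof (class_index_decomp n ltac:(unfold cidx, class_index in Hn; lia)) as Hn'.
      rewrite Hres in Hn'; set (t := ((n - l) / (k - l))%nat) in Hn'; clearbody t; subst n.
      assert (Ht : (T0 + 2 <= t)%nat) by (unfold cidx, class_index in Hn; nia).
      destruct t as [|[|t]]; try lia.
      rewrite class_vec_index, Cmod_mult, Cmod_pow, Cmod_conj, Cmod_xi, pow1, Rmult_1_l by auto.
      replace (cidx r (S (S t)) - (k - l))%nat with (cidx r (S t)) in Hb |- *
        by (unfold cidx; rewrite (class_index_S k l r (S t)); lia).
      eapply Rle_trans; [apply HK; lia|].
      apply Rmult_le_compat_r; [apply Rlt_le, Rinv_0_lt_compat; auto | apply Rle_abs].
    + rewrite class_vec_residue, Cmod_0 by auto; simpl; rewrite Rmult_0_l.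
      apply Rmult_le_pos; [apply Rabs_pos | apply Rlt_le, Rinv_0_lt_compat; auto].
  - apply abs_summable_of_add with (c := k).
    eapply abs_summable_le;
      [|exact (abs_summable_scal (Rabs K) _ (abs_summable_abs _ abs_summable_inv_pow_3_2))].
    intros u; replace (u + k - (k - l))%nat with (u + l)%nat by lia.
    assert (Hp : 0 < (INR u + 1) * sqrt (INR u + 1))
      by (pose proof (pos_INR u); apply Rmult_lt_0_compat; [lra | apply sqrt_lt_R0; lra]).
    pose proof (band_coef_pos k l (u + l) ltac:(lia)).
    rewrite Rabs_right
      by (apply Rle_ge, Rmult_le_pos; [apply Rabs_pos | apply Rlt_le, Rinv_0_lt_compat; auto]).
    apply Rmult_le_compat_l; [apply Rabs_pos|].
    rewrite Rabs_right by (apply Rle_ge, Rlt_le, Rinv_0_lt_compat, Hp).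
    apply Rinv_le_contravar; [exact Hp | apply band_coef_lower; auto; lia].
Qed.

Lemma class_vec_in_defect_space r : (r < k - l)%nat ->
  defect_space (opA k l theta f) s (fun n => Cconj (class_vec r n)).
Proof.
  intros Hr; split; [apply class_vec_l2, Hr|].
  apply (orth_shifted_opA_iff k l theta f s l_lt_k); intros j.
  rewrite (transposed_row_ext k l theta f s _ (class_vec r)) by (intros n; apply Cconj_conj).
  apply transposed_row_class_vec, Hr.
Qed.

Lemma defect_space_dim : s <> 0 -> has_dim (defect_space (opA k l theta f) s) (k - l).
Proof.
  intros Hs; exists (fun r n => Cconj (class_vec r n)); split; [|split].
  - exact class_vec_in_defect_space.
  - exact class_vec_independent.
  - intros psi Hpsi; exact (defect_space_spanned psi Hs Hpsi).
Qed.

End Dimension.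

End DefectBasis.

Theorem corollary4p17 (k l : nat) (theta : R) (f : nat -> R) (kappa : R) (lam : nat -> R) :
  (l < k)%nat -> (3 <= k + l)%nat ->
  (forall n, 0 <= f n) ->
  asymp_expansion (fun n => f n * Rpower (INR n) (- INR (k + l) / 2)) lam ->
  lam 0%nat = kappa ->
  kappa < 2 ->
  def_index_plus (opA k l theta f) (k - l) /\ def_index_minus (opA k l theta f) (k - l).
Proof.
  intros Hlk H3 Hf Has Hk0 Hk2; split.
  - exact (defect_space_dim k l theta f 1 Hlk lam kappa H3 Hf Has Hk0 Hk2 ltac:(lra)).
  - exact (defect_space_dim k l theta f (-1) Hlk lam kappa H3 Hf Has Hk0 Hk2 ltac:(lra)).
Qed.
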